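(* Let $L>0$, $T>0$, $K,M$ positive integers, $\Delta x=L/K$, $\Delta t=T/M$. Let $(E,N,V)$ be a sufficiently smooth solution of the periodic Zakharov system $\mathrm{i}E_t+E_{xx}=NE$, $N_t=V_{xx}$, $V_t=N+|E|^2$, $V(0,0)=0$ ($L$-periodic in $x$, $\int_0^LN_t(0,x)\,\mathrm{d}x=0$), and let $(E^{(m)},N^{(m)},V^{(m)})$, $m=0,\dots,M$, solve the DVDM scheme $$\begin{cases}\mathrm{i}\,\delta_t^+E^{(m)}_k=-\delta_x^{\langle 2\rangle}\mu_t^+E^{(m)}_k+(\mu_t^+N^{(m)}_k)(\mu_t^+E^{(m)}_k),\\ \delta_t^+N^{(m)}_k=\delta_x^{\langle 2\rangle}\mu_t^+V^{(m)}_k,\\ \delta_t^+V^{(m)}_k=\mu_t^+N^{(m)}_k+\mu_t^+|E^{(m)}_k|^2,\end{cases}$$ with $E^{(0)}_k=E(0,k\Delta x)$, $N^{(0)}_k=N(0,k\Delta x)$, $|V^{(0)}_k-V(0,k\Delta x)|\le C_V(\Delta x)^2$ ($C_V$ independent of $\Delta x$). Let $c_0>0$ be a constant not depending on $\Delta t,\Delta x$ such that $\|\tau_E^{(m)}\|,\|\delta_x^+\tau_E^{(m)}\|,\|\tau_N^{(m)}\|,\|\delta_x^+\tau_V^{(m)}\|\le c_0((\Delta t)^2+(\Delta x)^2)$ for $m=0,\dots,M-1$. Define $$A^{(m)}:=\langle e_N^{(m)}+\tilde N^{(m)},|e_E^{(m)}|^2\rangle+2\,\mathrm{Re}\langle e_E^{(m)},\tilde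 E^{(m)}e_N^{(m)}\rangle.$$ Suppose $\Delta t,\Delta x$ are sufficiently small. Then, for $m=0,\dots,M-1$, $$\delta_t^+\|\delta_x^+e_E^{(m)}\|^2\le-\delta_t^+A^{(m)}+C_3\big(\mathcal{E}_e^{(m+1)}+\mathcal{E}_e^{(m)}\big)+4c_0^2\big((\Delta x)^2+(\Delta t)^2\big)^2$$ for a constant $C_3>0$ not depending on $\Delta t$ and $\Delta x$.
   Context: Grid functions are $K$-periodic in $k$. Operators: $\delta_x^+u_k=(u_{k+1}-u_k)/\Delta x$, $\delta_x^{\langle 2\rangle}u_k=(u_{k+1}-2u_k+u_{k-1})/(\Delta x)^2$, $\delta_t^+u^{(m)}=(u^{(m+1)}-u^{(m)})/\Delta t$, $\mu_t^+u^{(m)}=(u^{(m+1)}+u^{(m)})/2$. Inner product $\langle v,w\rangle=\sum_{k=1}^Kv_k\bar w_k\Delta x$, norm $\|v\|=\langle v,v\rangle^{1/2}$. Products and $|\cdot|^2$ of grid functions are componentwise. Exact values: $\tilde E^{(m)}_k=E(m\Delta t,k\Delta x)$, $\tilde N^{(m)}_k$, $\tilde V^{(m)}_k$ likewise; errors $e_E^{(m)}=E^{(m)}-\tilde E^{(m)}$, $e_N^{(m)}=N^{(m)}-\tilde N^{(m)}$, $e_V^{(m)}=V^{(m)}-\tilde V^{(m)}$. Local truncation errors $\tau_E,\tau_N,\tau_V$ are defined by $\mathrm{i}\delta_t^+\tilde E^{(m)}_k=-\delta_x^{\langle 2\rangle}\mu_t^+\tilde E^{(m)}_k+(\mu_t^+\tilde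 N^{(m)}_k)(\mu_t^+\tilde E^{(m)}_k)+\tau^{(m)}_{E,k}$, $\delta_t^+\tilde N^{(m)}_k=\delta_x^{\langle 2\rangle}\mu_t^+\tilde V^{(m)}_k+\tau^{(m)}_{N,k}$, $\delta_t^+\tilde V^{(m)}_k=\mu_t^+\tilde N^{(m)}_k+\mu_t^+|\tilde E^{(m)}_k|^2+\tau^{(m)}_{V,k}$. Also $\mathcal{E}_e^{(m)}=\|e_E^{(m)}\|^2+\|\delta_x^+e_E^{(m)}\|^2+\|e_N^{(m)}\|^2+\|\delta_x^+e_V^{(m)}\|^2$. *)

From Stdlib Require Import Reals ZArith.
From Coquelicot Require Import Coquelicot.

Open Scope R_scope.

Definition pt (f : R -> R -> R) (t x : R) : R := Derive (fun s => f s x) t.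
Definition px (f : R -> R -> R) (t x : R) : R := Derive (fun y => f t y) x.

Definition ReF (E : R -> R -> C) : R -> R -> R := fun t x => Re (E t x).
Definition ImF (E : R -> R -> C) : R -> R -> R := fun t x => Im (E t x).

Definition ptC (E : R -> R -> C) (t x : R) : C := (pt (ReF E) t x, pt (ImF E) t x).
Definition pxC (E : R -> R -> C) (t x : R) : C := (px (ReF E) t x, px (ImF E) t x).

Definition smooth_strip (a b : R) (f : R -> R -> R) : Prop :=
  exists D : nat -> nat -> R -> R -> R,
    D 0%nat 0%nat = f /\
    forall (i j : nat) (t x : R), a < t < b ->
      is_derive (fun s => D i j s x) t (D (S i) j t x) /\
      is_derive (fun y => D i j t y) x (D i (S j) t x) /\
      continuous (fun p : R * R => D i j (fst p) (snd p)) (t, x).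

Definition zakharov_solution (L T : R) (E : R -> R -> C) (N V : R -> R -> R) : Prop :=
  (exists eps : R, 0 < eps /\
     smooth_strip (- eps) (T + eps) (ReF E) /\
     smooth_strip (- eps) (T + eps) (ImF E) /\
     smooth_strip (- eps) (T + eps) N /\
     smooth_strip (- eps) (T + eps) V) /\
  (forall t x, 0 <= t <= T ->
     E t (x + L) = E t x /\ N t (x + L) = N t x /\ V t (x + L) = V t x) /\
  (forall t x, 0 <= t <= T ->
     (Ci * ptC E t x + pxC (pxC E) t x)%C = (RtoC (N t x) * E t x)%C /\
     pt N t x = px (px V) t x /\
     pt V t x = N t x + (Cmod (E t x)) ^ 2) /\
  V 0 0 = 0 /\
  RInt (fun x => pt N 0 x) 0 L = 0.

Definition periodicC (K : nat) (u : Z -> C) : Prop := forall k, u (k + Z.of_nat K)%Z = u k.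
Definition periodicR (K : nat) (u : Z -> R) : Prop := forall k, u (k + Z.of_nat K)%Z = u k.

(** sum_{k=1}^{K} f k *)
Fixpoint sumC (K : nat) (f : Z -> C) : C :=
  match K with O => RtoC 0 | S K' => (sumC K' f + f (Z.of_nat (S K')))%C end.
Fixpoint sumR (K : nat) (f : Z -> R) : R :=
  match K with O => 0 | S K' => sumR K' f + f (Z.of_nat (S K')) end.

Definition ipC (K : nat) (dx : R) (v w : Z -> C) : C :=
  (sumC K (fun k => v k * Cconj (w k)) * RtoC dx)%C.
Definition ipR (K : nat) (dx : R) (v w : Z -> R) : R :=
  sumR K (fun k => v k * w k) * dx.
Definition normC (K : nat) (dx : R) (v : Z -> C) : R := sqrt (Re (ipC K dx v v)).
Definition normR (K : nat) (dx : R) (v : Z -> R) : R := sqrt (ipR K dx v v).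

Definition dxpC (dx : R) (u : Z -> C) : Z -> C :=
  fun k => ((u (k + 1)%Z - u k) / RtoC dx)%C.
Definition dxpR (dx : R) (u : Z -> R) : Z -> R :=
  fun k => (u (k + 1)%Z - u k) / dx.
Definition dx2C (dx : R) (u : Z -> C) : Z -> C :=
  fun k => ((u (k + 1)%Z - RtoC 2 * u k + u (k - 1)%Z) / RtoC (dx ^ 2))%C.
Definition dx2R (dx : R) (u : Z -> R) : Z -> R :=
  fun k => (u (k + 1)%Z - 2 * u k + u (k - 1)%Z) / (dx ^ 2).
Definition dtpC (dt : R) (u : nat -> Z -> C) (m : nat) : Z -> C :=
  fun k => ((u (S m) k - u m k) / RtoC dt)%C.
Definition dtpR (dt : R) (u : nat -> Z -> R) (m : nat) : Z -> R :=
  fun k => (u (S m) k - u m k) / dt.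
Definition mutC (u : nat -> Z -> C) (m : nat) : Z -> C :=
  fun k => ((u (S m) k + u m k) / RtoC 2)%C.
Definition mutR (u : nat -> Z -> R) (m : nat) : Z -> R :=
  fun k => (u (S m) k + u m k) / 2.
Definition dtps (dt : R) (a : nat -> R) (m : nat) : R := (a (S m) - a m) / dt.

Definition abs2 (u : Z -> C) : Z -> R := fun k => (Cmod (u k)) ^ 2.

Definition exactC (dt dx : R) (E : R -> R -> C) : nat -> Z -> C :=
  fun m k => E (INR m * dt) (IZR k * dx).
Definition exactR (dt dx : R) (N : R -> R -> R) : nat -> Z -> R :=
  fun m k => N (INR m * dt) (IZR k * dx).

Definition dvdm_scheme (M : nat) (dt dx : R)
    (Es : nat -> Z -> C) (Ns Vs : nat -> Z -> R) : Prop :=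
  forall (m : nat) (k : Z), (m < M)%nat ->
    (Ci * dtpC dt Es m k)%C =
      (- dx2C dx (mutC Es m) k + RtoC (mutR Ns m k) * mutC Es m k)%C /\
    dtpR dt Ns m k = dx2R dx (mutR Vs m) k /\
    dtpR dt Vs m k = mutR Ns m k + mutR (fun j => abs2 (Es j)) m k.

Definition tauE (dt dx : R) (E : R -> R -> C) (N : R -> R -> R) (m : nat) : Z -> C :=
  let Et := exactC dt dx E in let Nt := exactR dt dx N in
  fun k => (Ci * dtpC dt Et m k + dx2C dx (mutC Et m) k
            - RtoC (mutR Nt m k) * mutC Et m k)%C.
Definition tauN (dt dx : R) (N V : R -> R -> R) (m : nat) : Z -> R :=
  fun k => dtpR dt (exactR dt dx N) m k - dx2R dx (mutR (exactR dt dx V) m) k.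
Definition tauV (dt dx : R) (E : R -> R -> C) (N V : R -> R -> R) (m : nat) : Z -> R :=
  fun k => dtpR dt (exactR dt dx V) m k - mutR (exactR dt dx N) m k
           - mutR (fun j => abs2 (exactC dt dx E j)) m k.

Definition errC (u v : nat -> Z -> C) : nat -> Z -> C := fun m k => (u m k - v m k)%C.
Definition errR (u v : nat -> Z -> R) : nat -> Z -> R := fun m k => u m k - v m k.

Definition err_energy (K : nat) (dt dx : R) (E : R -> R -> C) (N V : R -> R -> R)
    (Es : nat -> Z -> C) (Ns Vs : nat -> Z -> R) (m : nat) : R :=
  let eE := errC Es (exactC dt dx E) m in
  let eN := errR Ns (exactR dt dx N) m in
  let eV := errR Vs (exactR dt dx V) m in
  (normC K dx eE) ^ 2 + (normC K dx (dxpC dx eE)) ^ 2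
  + (normR K dx eN) ^ 2 + (normR K dx (dxpR dx eV)) ^ 2.

Definition Aterm (K : nat) (dt dx : R) (E : R -> R -> C) (N : R -> R -> R)
    (Es : nat -> Z -> C) (Ns : nat -> Z -> R) (m : nat) : R :=
  let eE := errC Es (exactC dt dx E) m in
  let eN := errR Ns (exactR dt dx N) m in
  ipR K dx (fun k => eN k + exactR dt dx N m k) (abs2 eE)
  + 2 * Re (ipC K dx eE (fun k => (exactC dt dx E m k * RtoC (eN k))%C)).

(* The scheme conserves the discrete mass [||E||^2] and energy
   [||delta E||^2 + <N, |E|^2> + ||N||^2 / 2 + ||delta V||^2 / 2].  Together with the discrete
   Sobolev inequality [|u|_oo^2 <= ||u||^2 / L + eps ||delta u||^2 + 4 ||u||^2 / eps] this
   bounds [||N^(m)||] and [||delta V^(m)||] uniformly in [m].  Testing the error equations with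
   [delta_t e_E] (and those for [N], [e_N] with [mu_t |e_E|^2], [mu_t Re(e_E conj E~)]) and
   summing by parts gives an exact identity for [delta_t (||delta e_E||^2 + A)], whose terms are
   products of errors, truncation errors, and the exact solution; each is bounded by Young's
   inequality, the Sobolev inequality and the sup bounds of the smooth solution on the compact
   set [[0, T] x [0, 2 L]]. *)

From Stdlib Require Import Reals ZArith Lra Lia Psatz List RList.
From Stdlib Require Import Classical ClassicalEpsilon FunctionalExtensionality.
From Coquelicot Require Import Coquelicot.
Open Scope R_scope.

(** * Periodic grid functions *)

Lemma sumR_ext (K : nat) (f g : Z -> R) :
  (forall k, f k = g k) -> sumR K f = sumR K g.
Proof. intros H; induction K as [|K IH]; simpl; [reflexivity|]. now rewrite IH, H. Qed.

Lemma sumR_plus (K : nat) (f g : Z -> R) :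
  sumR K (fun k => f k + g k) = sumR K f + sumR K g.
Proof. induction K as [|K IH]; cbn [sumR]; [lra|]. rewrite IH; lra. Qed.

Lemma sumR_minus (K : nat) (f g : Z -> R) :
  sumR K (fun k => f k - g k) = sumR K f - sumR K g.
Proof. induction K as [|K IH]; cbn [sumR]; [lra|]. rewrite IH; lra. Qed.

Lemma sumR_scal (K : nat) (c : R) (f : Z -> R) :
  sumR K (fun k => c * f k) = c * sumR K f.
Proof. induction K as [|K IH]; cbn [sumR]; [lra|]. rewrite IH; lra. Qed.

Lemma sumR_const (K : nat) (c : R) : sumR K (fun _ => c) = INR K * c.
Proof. induction K as [|K IH]; simpl sumR; [simpl; lra|]. rewrite IH, S_INR; lra. Qed.

Lemma sumR_le (K : nat) (f g : Z -> R) :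
  (forall k, f k <= g k) -> sumR K f <= sumR K g.
Proof.
  intros H; induction K as [|K IH]; cbn [sumR]; [lra|].
  specialize (H (Z.of_nat (S K))); lra.
Qed.

Lemma sumR_nonneg (K : nat) (f : Z -> R) : (forall k, 0 <= f k) -> 0 <= sumR K f.
Proof.
  intros H; induction K as [|K IH]; cbn [sumR]; [lra|].
  specialize (H (Z.of_nat (S K))); lra.
Qed.

Lemma sumR_Rabs (K : nat) (f : Z -> R) : Rabs (sumR K f) <= sumR K (fun k => Rabs (f k)).
Proof.
  induction K as [|K IH]; simpl; [rewrite Rabs_R0; lra|].
  eapply Rle_trans; [apply Rabs_triang | lra].
Qed.

Lemma sumR_le_length (n K : nat) (f : Z -> R) :
  (n <= K)%nat -> (forall k, 0 <= f k) -> sumR n f <= sumR K f.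
Proof.
  intros HnK Hf; induction HnK as [|K _ IH]; cbn [sumR]; [lra|].
  specialize (Hf (Z.of_nat (S K))); lra.
Qed.

Lemma sumR_shift (n : nat) (f : Z -> R) :
  sumR n (fun k => f (k + 1)%Z) = sumR n f - f 1%Z + f (Z.of_nat n + 1)%Z.
Proof.
  induction n as [|n IH]; cbn [sumR]; [simpl; lra|].
  rewrite IH, Nat2Z.inj_succ; unfold Z.succ; lra.
Qed.

Lemma sumR_telescope (n : nat) (f : Z -> R) :
  sumR n (fun k => f (k + 1)%Z - f k) = f (Z.of_nat n + 1)%Z - f 1%Z.
Proof. rewrite sumR_minus, sumR_shift; ring. Qed.

Lemma periodicR_shift1 (K : nat) (f : Z -> R) :
  periodicR K f -> periodicR K (fun k => f (k + 1)%Z).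
Proof.
  intros Hf k; cbv beta.
  now rewrite <- Z.add_assoc, (Z.add_comm (Z.of_nat K)), Z.add_assoc, Hf.
Qed.

Lemma periodicR_shiftm1 (K : nat) (f : Z -> R) :
  periodicR K f -> periodicR K (fun k => f (k - 1)%Z).
Proof.
  intros Hf k; cbv beta.
  now replace (k + Z.of_nat K - 1)%Z with (k - 1 + Z.of_nat K)%Z by ring.
Qed.

Lemma sumR_shift_periodic (K : nat) (f : Z -> R) :
  periodicR K f -> sumR K (fun k => f (k + 1)%Z) = sumR K f.
Proof.
  intros Hf; rewrite sumR_shift, Z.add_comm, Hf; ring.
Qed.

Lemma periodicR_dxpR (K : nat) (dx : R) (f : Z -> R) :
  periodicR K f -> periodicR K (dxpR dx f).
Proof. intros Hf k; unfold dxpR; now rewrite (periodicR_shift1 K f Hf k), Hf. Qed.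

Definition sbp_term (dx : R) (u w : Z -> R) (k : Z) : R :=
  dx2R dx u k * w k + dxpR dx u k * dxpR dx w k.

Lemma sumR_sbp_term (K : nat) (dx : R) (u w : Z -> R) :
  dx <> 0 -> periodicR K u -> periodicR K w -> sumR K (sbp_term dx u w) = 0.
Proof.
  intros Hdx Hu Hw.
  set (h := fun k => (u k - u (k - 1)%Z) * w k / dx ^ 2).
  rewrite (sumR_ext _ _ (fun k => h (k + 1)%Z - h k)).
  - rewrite sumR_minus, sumR_shift_periodic; [ring|].
    intro k; unfold h; now rewrite Hu, Hw, (periodicR_shiftm1 K u Hu).
  - intro k; unfold h, sbp_term, dx2R, dxpR.
    replace (k + 1 - 1)%Z with k by ring. field; auto.
Qed.

Lemma periodicR_repr (K : nat) (f : Z -> R) (k : Z) :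
  (1 <= K)%nat -> periodicR K f ->
  exists i : nat, (1 <= i <= K)%nat /\ f k = f (Z.of_nat i).
Proof.
  intros HK Hf.
  assert (Hmult : forall (n : nat) j, f (j + Z.of_nat K * Z.of_nat n)%Z = f j).
  { induction n as [|n IH]; intro j.
    - now rewrite Z.mul_0_r, Z.add_0_r.
    - rewrite <- (Hf j), <- (IH (j + Z.of_nat K)%Z). f_equal; lia. }
  set (r := ((k - 1) mod Z.of_nat K)%Z).
  set (q := ((k - 1) / Z.of_nat K)%Z).
  assert (Hr : (0 <= r < Z.of_nat K)%Z) by (apply Z.mod_pos_bound; lia).
  assert (Hk : k = (r + 1 + Z.of_nat K * q)%Z)
    by (unfold r, q; pose proof (Z.div_mod (k - 1) (Z.of_nat K)); lia).
  exists (S (Z.to_nat r)); split; [lia|].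
  replace (Z.of_nat (S (Z.to_nat r))) with (r + 1)%Z by lia.
  destruct (Z_le_gt_dec 0 q) as [Hq | Hq].
  - rewrite Hk, <- (Z2Nat.id q Hq). apply Hmult.
  - rewrite <- (Hmult (Z.to_nat (- q)) k), Hk. f_equal.
    rewrite Z2Nat.id by lia. ring.
Qed.

Lemma periodicR_bounded (K : nat) (f : Z -> R) (B : R) :
  (1 <= K)%nat -> periodicR K f ->
  (forall i : nat, (1 <= i <= K)%nat -> Rabs (f (Z.of_nat i)) <= B) ->
  forall k, Rabs (f k) <= B.
Proof.
  intros HK Hf HB k.
  destruct (periodicR_repr K f k HK Hf) as [i [Hi ->]]. now apply HB.
Qed.

Lemma periodicR_oscillation (K : nat) (g : Z -> R) (k j : Z) :
  (1 <= K)%nat -> periodicR K g ->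
  g k <= g j + 2 * sumR K (fun i => Rabs (g (i + 1)%Z - g i)).
Proof.
  intros HK Hg.
  set (D := sumR K (fun i => Rabs (g (i + 1)%Z - g i))).
  assert (Hdist : forall l, Rabs (g l - g 1%Z) <= D).
  { intro l; destruct (periodicR_repr K g l HK Hg) as [[|i] [Hi ->]]; [lia|].
    replace (Z.of_nat (S i)) with (Z.of_nat i + 1)%Z by lia.
    rewrite <- sumR_telescope. eapply Rle_trans; [apply sumR_Rabs|].
    apply sumR_le_length; [lia | intro; apply Rabs_pos]. }
  pose proof (Hdist k) as Hk; pose proof (Hdist j) as Hj.
  apply Rabs_le_between in Hk, Hj. lra.
Qed.

(** * Discrete norms and the Sobolev inequality *)

Lemma pow2_le_of_Rabs_le (u B : R) : Rabs u <= B -> u ^ 2 <= B ^ 2.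
Proof. intros H; rewrite <- (pow2_abs u); pose proof (Rabs_pos u); nra. Qed.

Lemma pow2_plus_le (u v : R) : (u + v) ^ 2 <= 2 * u ^ 2 + 2 * v ^ 2.
Proof. pose proof (pow2_ge_0 (u - v)); nra. Qed.

Lemma pow2_avg_le (u v : R) : ((u + v) / 2) ^ 2 <= (u ^ 2 + v ^ 2) / 2.
Proof. pose proof (pow2_ge_0 (u - v)); nra. Qed.

Lemma two_mul_le_pow2_plus (u v : R) : 2 * (u * v) <= u ^ 2 + v ^ 2.
Proof. pose proof (pow2_ge_0 (u - v)); nra. Qed.

Lemma pow2_mul_le_Rabs (u c B : R) : Rabs c <= B -> (u * c) ^ 2 <= B ^ 2 * u ^ 2.
Proof.
  intros Hc; pose proof (pow2_le_of_Rabs_le _ _ Hc); pose proof (pow2_ge_0 u).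
  replace ((u * c) ^ 2) with (u ^ 2 * c ^ 2) by ring. nra.
Qed.

Lemma pow2_avg_le_Rabs (c d B : R) : Rabs c <= B -> Rabs d <= B -> ((c + d) / 2) ^ 2 <= B ^ 2.
Proof.
  intros Hc Hd; apply pow2_le_of_Rabs_le, Rabs_le.
  apply Rabs_le_between in Hc, Hd; lra.
Qed.

Definition normsq (K : nat) (dx : R) (u : Z -> R) : R := sumR K (fun k => u k ^ 2) * dx.

Definition normsq2 (K : nat) (dx : R) (p q : Z -> R) : R :=
  sumR K (fun k => p k ^ 2 + q k ^ 2) * dx.

Lemma normsq_nonneg (K : nat) (dx : R) (u : Z -> R) : 0 <= dx -> 0 <= normsq K dx u.
Proof. intros Hdx; apply Rmult_le_pos; [apply sumR_nonneg; intro; nra | exact Hdx]. Qed.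

Lemma normsq2_nonneg (K : nat) (dx : R) (p q : Z -> R) : 0 <= dx -> 0 <= normsq2 K dx p q.
Proof. intros Hdx; apply Rmult_le_pos; [apply sumR_nonneg; intro; nra | exact Hdx]. Qed.

Lemma normsq_le_bounded (K : nat) (dx B : R) (u : Z -> R) :
  0 <= dx -> (forall k, Rabs (u k) <= B) -> normsq K dx u <= INR K * dx * B ^ 2.
Proof.
  intros Hdx HB; unfold normsq.
  rewrite (Rmult_comm (INR K)), Rmult_assoc, (Rmult_comm dx), <- sumR_const.
  apply Rmult_le_compat_r; [exact Hdx|].
  apply sumR_le; intro k. now apply pow2_le_of_Rabs_le.
Qed.

Lemma normsq2_split (K : nat) (dx : R) (p q : Z -> R) :
  normsq2 K dx p q = normsq K dx p + normsq K dx q.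
Proof. unfold normsq2, normsq. rewrite sumR_plus. ring. Qed.

Lemma young_pair (eps a b c d : R) : 0 < eps ->
  Rabs (a * b + c * d) <= eps / 2 * (a ^ 2 + c ^ 2) + / (2 * eps) * (b ^ 2 + d ^ 2).
Proof.
  intros He.
  assert (Hi : 0 <= / (2 * eps)) by (left; apply Rinv_0_lt_compat; lra).
  assert (Hm : eps / 2 * (a ^ 2 + c ^ 2) + / (2 * eps) * (b ^ 2 + d ^ 2) - (a * b + c * d)
               = / (2 * eps) * ((eps * a - b) ^ 2 + (eps * c - d) ^ 2)) by (field; lra).
  assert (Hp : eps / 2 * (a ^ 2 + c ^ 2) + / (2 * eps) * (b ^ 2 + d ^ 2) + (a * b + c * d)
               = / (2 * eps) * ((eps * a + b) ^ 2 + (eps * c + d) ^ 2)) by (field; lra).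
  assert (Hsq : forall u w, 0 <= u ^ 2 + w ^ 2)
    by (intros u w; apply Rplus_le_le_0_compat; apply pow2_ge_0).
  pose proof (Rmult_le_pos _ _ Hi (Hsq (eps * a - b) (eps * c - d))).
  pose proof (Rmult_le_pos _ _ Hi (Hsq (eps * a + b) (eps * c + d))).
  apply Rabs_le; lra.
Qed.

(* The total variation of [|u|^2] is bounded by Young's inequality with weight [eps],
   and a periodic function deviates from its mean by at most twice its total variation. *)
Lemma discrete_sobolev (K : nat) (dx L eps : R) (p q : Z -> R) :
  (1 <= K)%nat -> 0 < dx -> L = INR K * dx -> 0 < eps -> periodicR K p -> periodicR K q ->
  forall k, p k ^ 2 + q k ^ 2 <=
    normsq2 K dx p q / L + eps * normsq2 K dx (dxpR dx p) (dxpR dx q) + 4 / eps * normsq2 K dx p q.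
Proof.
  intros HK Hdx HL He Hp Hq k.
  set (g := fun j => p j ^ 2 + q j ^ 2).
  assert (Hg : periodicR K g) by (intro j; unfold g; now rewrite Hp, Hq).
  set (D := sumR K (fun i => Rabs (g (i + 1)%Z - g i))).
  assert (HKpos : 0 < INR K) by (apply lt_0_INR; lia).
  assert (Hmean : INR K * g k <= sumR K g + INR K * (2 * D)).
  { rewrite <- !sumR_const, <- sumR_plus. apply sumR_le; intro j.
    now apply periodicR_oscillation. }
  assert (Hvar : D <= eps / 2 * normsq2 K dx (dxpR dx p) (dxpR dx q) + 2 / eps * normsq2 K dx p q).
  { unfold normsq2.
    replace (eps / 2 * (sumR K (fun j => dxpR dx p j ^ 2 + dxpR dx q j ^ 2) * dx)
             + 2 / eps * (sumR K (fun j => p j ^ 2 + q j ^ 2) * dx))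
      with (sumR K (fun j => eps / 2 * dx * (dxpR dx p j ^ 2 + dxpR dx q j ^ 2)
                             + dx / eps * (g (j + 1)%Z + g j)))
      by (rewrite sumR_plus, !sumR_scal, (sumR_plus K (fun j => g (j + 1)%Z)),
            (sumR_shift_periodic K g Hg); unfold g; field; lra).
    apply sumR_le; intro j. unfold g, dxpR.
    set (p0 := p j); set (p1 := p (j + 1)%Z); set (q0 := q j); set (q1 := q (j + 1)%Z).
    replace (p1 ^ 2 + q1 ^ 2 - (p0 ^ 2 + q0 ^ 2))
      with (dx * ((p1 - p0) / dx * (p1 + p0) + (q1 - q0) / dx * (q1 + q0))) by (field; lra).
    rewrite Rabs_mult, (Rabs_pos_eq dx) by lra.
    pose proof (young_pair eps ((p1 - p0) / dx) (p1 + p0) ((q1 - q0) / dx) (q1 + q0) He) as Hy.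
    assert (Hsum : (p1 + p0) ^ 2 + (q1 + q0) ^ 2 <= 2 * (p1 ^ 2 + q1 ^ 2 + (p0 ^ 2 + q0 ^ 2)))
      by (pose proof (pow2_ge_0 (p1 - p0)); pose proof (pow2_ge_0 (q1 - q0)); nra).
    assert (Hi : 0 <= dx * / (2 * eps))
      by (apply Rmult_le_pos; [lra | left; apply Rinv_0_lt_compat; lra]).
    replace (dx / eps * (p1 ^ 2 + q1 ^ 2 + (p0 ^ 2 + q0 ^ 2)))
      with (dx * / (2 * eps) * (2 * (p1 ^ 2 + q1 ^ 2 + (p0 ^ 2 + q0 ^ 2)))) by (field; lra).
    nra. }
  assert (HSg : INR K * (normsq2 K dx p q / L) = sumR K g)
    by (unfold normsq2, g; rewrite HL; field; lra).
  assert (HKD : INR K * (2 * D) <= INR K * (eps * normsq2 K dx (dxpR dx p) (dxpR dx q)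
                                           + 4 / eps * normsq2 K dx p q))
    by (apply Rmult_le_compat_l; lra).
  change (p k ^ 2 + q k ^ 2) with (g k).
  apply (Rmult_le_reg_l (INR K)); [exact HKpos|]. lra.
Qed.

(** * Conservation and a priori bounds *)

(* [dvdm_scheme] for [E = p + i q]. *)
Definition dvdm_real (M : nat) (dt dx : R) (p q N V : nat -> Z -> R) : Prop :=
  forall m k, (m < M)%nat ->
    - dtpR dt q m k = - dx2R dx (mutR p m) k + mutR N m k * mutR p m k /\
    dtpR dt p m k = - dx2R dx (mutR q m) k + mutR N m k * mutR q m k /\
    dtpR dt N m k = dx2R dx (mutR V m) k /\
    dtpR dt V m k = mutR N m k + mutR (fun j i => p j i ^ 2 + q j i ^ 2) m k.

Definition energy (K : nat) (dx : R) (p q N V : Z -> R) : R :=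
  normsq2 K dx (dxpR dx p) (dxpR dx q) + sumR K (fun k => N k * (p k ^ 2 + q k ^ 2)) * dx
  + / 2 * normsq K dx N + / 2 * normsq K dx (dxpR dx V).

Lemma energy_sumR (K : nat) (dx : R) (p q N V : Z -> R) :
  energy K dx p q N V =
  sumR K (fun k => dxpR dx p k ^ 2 + dxpR dx q k ^ 2 + N k * (p k ^ 2 + q k ^ 2)
                   + / 2 * N k ^ 2 + / 2 * dxpR dx V k ^ 2) * dx.
Proof. unfold energy, normsq2, normsq. rewrite !sumR_plus, !sumR_scal. ring. Qed.

Section Conservation.

Variables (K M : nat) (dt dx : R) (p q N V : nat -> Z -> R).
Hypotheses (Hdt : dt <> 0) (Hdx : dx <> 0).
Hypothesis Hscheme : dvdm_real M dt dx p q N V.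
Hypotheses (Hp : forall m, periodicR K (p m)) (Hq : forall m, periodicR K (q m))
  (HV : forall m, periodicR K (V m)).

Lemma dvdm_real_mass_step (m : nat) :
  (m < M)%nat -> normsq2 K dx (p (S m)) (q (S m)) = normsq2 K dx (p m) (q m).
Proof.
  intros Hm.
  set (mp := mutR p m); set (mq := mutR q m).
  assert (Pmp : periodicR K mp) by (intro k; unfold mp, mutR; now rewrite Hp, Hp).
  assert (Pmq : periodicR K mq) by (intro k; unfold mq, mutR; now rewrite Hq, Hq).
  unfold normsq2. apply Rmult_eq_compat_r, Rminus_diag_uniq. rewrite <- sumR_minus.
  rewrite (sumR_ext _ _ (fun k => 2 * dt * (sbp_term dx mp mq k - sbp_term dx mq mp k))).
  - rewrite sumR_scal, sumR_minus, !sumR_sbp_term by assumption. ring.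
  - intro k. unfold sbp_term. destruct (Hscheme m k Hm) as [E1 [E2 _]].
    fold mp mq in E1, E2. unfold dtpR in E1, E2.
    assert (D1 : dx2R dx mp k = (q (S m) k - q m k) / dt + mutR N m k * mp k) by lra.
    assert (D2 : dx2R dx mq k = - ((p (S m) k - p m k) / dt) + mutR N m k * mq k) by lra.
    rewrite D1, D2. unfold mp, mq, mutR. field. exact Hdt.
Qed.

Lemma dvdm_real_energy_step (m : nat) :
  (m < M)%nat ->
  energy K dx (p (S m)) (q (S m)) (N (S m)) (V (S m)) = energy K dx (p m) (q m) (N m) (V m).
Proof.
  intros Hm.
  set (mp := mutR p m); set (mq := mutR q m); set (mV := mutR V m).
  assert (Pmp : periodicR K mp) by (intro k; unfold mp, mutR; now rewrite Hp, Hp).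
  assert (Pmq : periodicR K mq) by (intro k; unfold mq, mutR; now rewrite Hq, Hq).
  assert (PmV : periodicR K mV) by (intro k; unfold mV, mutR; now rewrite HV, HV).
  set (dp := fun k => p (S m) k - p m k); set (dq := fun k => q (S m) k - q m k).
  set (dV := fun k => V (S m) k - V m k).
  assert (Pdp : periodicR K dp) by (intro k; unfold dp; now rewrite Hp, Hp).
  assert (Pdq : periodicR K dq) by (intro k; unfold dq; now rewrite Hq, Hq).
  assert (PdV : periodicR K dV) by (intro k; unfold dV; now rewrite HV, HV).
  apply Rminus_diag_uniq. rewrite !energy_sumR, <- Rmult_minus_distr_r, <- sumR_minus.
  rewrite (sumR_ext _ _ (fun k => 2 * sbp_term dx mp dp k
                                  + (2 * sbp_term dx mq dq k + sbp_term dx mV dV k))).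
  { rewrite !sumR_plus, !sumR_scal, !sumR_sbp_term by assumption. ring. }
  intro k.
  destruct (Hscheme m k Hm) as [E1 [E2 [E3 E4]]].
  fold mp mq mV in E1, E2, E3. unfold dtpR in E1, E2, E3, E4. unfold mutR in E4.
  assert (D1 : dx2R dx mp k = (q (S m) k - q m k) / dt + mutR N m k * mp k) by lra.
  assert (D2 : dx2R dx mq k = - ((p (S m) k - p m k) / dt) + mutR N m k * mq k) by lra.
  (* [N (S m)] is eliminated with the equation for [V]. *)
  assert (HN1 : N (S m) k = 2 * ((V (S m) k - V m k) / dt
                  - (p (S m) k ^ 2 + q (S m) k ^ 2 + (p m k ^ 2 + q m k ^ 2)) / 2) - N m k)
    by (rewrite E4; field; exact Hdt).
  unfold sbp_term. rewrite D1, D2, <- E3. unfold mp, mq, mV, dp, dq, dV, mutR, dxpR.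
  rewrite HN1. field. auto.
Qed.

Lemma dvdm_real_conservation (j : nat) :
  (j <= M)%nat ->
  normsq2 K dx (p j) (q j) = normsq2 K dx (p 0%nat) (q 0%nat) /\
  energy K dx (p j) (q j) (N j) (V j) = energy K dx (p 0%nat) (q 0%nat) (N 0%nat) (V 0%nat).
Proof.
  induction j as [|j IH]; intros Hj; [split; reflexivity|].
  destruct IH as [IH1 IH2]; [lia|].
  rewrite dvdm_real_mass_step, dvdm_real_energy_step by lia. now split.
Qed.

End Conservation.

Definition potential_bound (L Hb mb : R) : R := 4 * (Hb + mb ^ 2 / L + 8 * mb ^ 2 * (mb + 1)).

(* The discrete Sobolev inequality with [eps = 1 / (2 (m + 1))]. *)
Lemma discrete_L4_bound (K : nat) (dx L : R) (p q : Z -> R) :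
  (1 <= K)%nat -> 0 < dx -> L = INR K * dx -> periodicR K p -> periodicR K q ->
  sumR K (fun k => (p k ^ 2 + q k ^ 2) ^ 2) * dx
  <= normsq2 K dx p q ^ 2 / L + normsq2 K dx (dxpR dx p) (dxpR dx q) / 2
     + 8 * normsq2 K dx p q ^ 2 * (normsq2 K dx p q + 1).
Proof.
  intros HK Hdx HL Hp Hq.
  assert (HLp : 0 < L) by (rewrite HL; apply Rmult_lt_0_compat; [apply lt_0_INR; lia | lra]).
  set (m := normsq2 K dx p q); set (a := normsq2 K dx (dxpR dx p) (dxpR dx q)).
  assert (Hm0 : 0 <= m) by (apply normsq2_nonneg; lra).
  assert (Ha0 : 0 <= a) by (apply normsq2_nonneg; lra).
  set (eps := / (2 * (m + 1))).
  assert (Heps : 0 < eps) by (apply Rinv_0_lt_compat; lra).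
  set (C := m / L + eps * a + 4 / eps * m).
  assert (Hsup : forall k, p k ^ 2 + q k ^ 2 <= C) by (intro k; now apply discrete_sobolev).
  assert (Hsum : sumR K (fun k => (p k ^ 2 + q k ^ 2) ^ 2) * dx <= C * m).
  { unfold m, normsq2. rewrite <- Rmult_assoc, <- sumR_scal.
    apply Rmult_le_compat_r; [lra|]. apply sumR_le; intro k.
    specialize (Hsup k). assert (0 <= p k ^ 2 + q k ^ 2) by nra. nra. }
  assert (Hem : eps * m <= / 2).
  { unfold eps. apply (Rmult_le_reg_l (2 * (m + 1))); [lra|].
    replace (2 * (m + 1) * (/ (2 * (m + 1)) * m)) with m by (field; lra). lra. }
  assert (eps * a * m <= a / 2) by nra.
  replace (C * m) with (m ^ 2 / L + eps * a * m + 8 * m ^ 2 * (m + 1)) in Hsum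
    by (unfold C, eps; field; lra).
  lra.
Qed.

(* The indefinite term [<N, |u|^2>] of the energy is absorbed by [||N||^2 / 4] and the
   [L^4] bound. *)
Lemma energy_controls_potential (K : nat) (dx L Hb mb : R) (p q N V : Z -> R) :
  (1 <= K)%nat -> 0 < dx -> L = INR K * dx -> periodicR K p -> periodicR K q ->
  energy K dx p q N V <= Hb -> normsq2 K dx p q <= mb ->
  normsq K dx N <= potential_bound L Hb mb /\
  normsq K dx (dxpR dx V) <= potential_bound L Hb mb.
Proof.
  intros HK Hdx HL Hp Hq HH Hm.
  assert (HLp : 0 < L) by (rewrite HL; apply Rmult_lt_0_compat; [apply lt_0_INR; lia | lra]).
  pose proof (discrete_L4_bound K dx L p q HK Hdx HL Hp Hq) as HL4.
  set (m := normsq2 K dx p q) in *; set (a := normsq2 K dx (dxpR dx p) (dxpR dx q)) in *.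
  set (c := normsq K dx N); set (d := normsq K dx (dxpR dx V)).
  assert (Hm0 : 0 <= m) by (apply normsq2_nonneg; lra).
  assert (Ha0 : 0 <= a) by (apply normsq2_nonneg; lra).
  assert (Hc0 : 0 <= c) by (apply normsq_nonneg; lra).
  assert (Hd0 : 0 <= d) by (apply normsq_nonneg; lra).
  set (g := fun k => p k ^ 2 + q k ^ 2).
  assert (Hcoupling : - (c / 4) - sumR K (fun k => g k ^ 2) * dx
                      <= sumR K (fun k => N k * g k) * dx).
  { unfold c, normsq.
    assert (Hpt : sumR K (fun k => - / 4 * N k ^ 2 - g k ^ 2) <= sumR K (fun k => N k * g k)).
    { apply sumR_le; intro k. pose proof (pow2_ge_0 (N k / 2 + g k)). nra. }
    rewrite sumR_minus, sumR_scal in Hpt. nra. }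
  assert (Hmono : m ^ 2 / L + 8 * m ^ 2 * (m + 1) <= mb ^ 2 / L + 8 * mb ^ 2 * (mb + 1)).
  { assert (m ^ 2 <= mb ^ 2) by (apply pow_incr; lra).
    assert (m ^ 2 * (m + 1) <= mb ^ 2 * (mb + 1))
      by (apply Rmult_le_compat; [apply pow2_ge_0 | lra | assumption | lra]).
    assert (m ^ 2 / L <= mb ^ 2 / L)
      by (apply Rmult_le_compat_r; [left; apply Rinv_0_lt_compat |]; lra).
    lra. }
  assert (HE : energy K dx p q N V = a + sumR K (fun k => N k * g k) * dx + / 2 * c + / 2 * d)
    by reflexivity.
  change (sumR K (fun k => (p k ^ 2 + q k ^ 2) ^ 2)) with (sumR K (fun k => g k ^ 2)) in HL4.
  unfold potential_bound. rewrite HE in HH. split; lra.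
Qed.

Lemma energy_le_bounded (K : nat) (dx B BN BV : R) (p q N V : Z -> R) :
  0 < dx ->
  (forall k, Rabs (p k) <= B) -> (forall k, Rabs (q k) <= B) ->
  (forall k, Rabs (dxpR dx p k) <= B) -> (forall k, Rabs (dxpR dx q k) <= B) ->
  (forall k, Rabs (N k) <= BN) -> (forall k, Rabs (dxpR dx V k) <= BV) ->
  energy K dx p q N V
  <= INR K * dx * (2 * B ^ 2 + BN * (2 * B ^ 2) + / 2 * BN ^ 2 + / 2 * BV ^ 2).
Proof.
  intros Hdx Hp Hq Hdp Hdq HN HV.
  rewrite energy_sumR, (Rmult_comm (INR K)), Rmult_assoc, (Rmult_comm dx), <- sumR_const.
  apply Rmult_le_compat_r; [lra|]. apply sumR_le; intro k.
  pose proof (pow2_le_of_Rabs_le _ _ (Hp k)); pose proof (pow2_le_of_Rabs_le _ _ (Hq k)).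
  pose proof (pow2_le_of_Rabs_le _ _ (Hdp k)); pose proof (pow2_le_of_Rabs_le _ _ (Hdq k)).
  pose proof (pow2_le_of_Rabs_le _ _ (HN k)); pose proof (pow2_le_of_Rabs_le _ _ (HV k)).
  assert (Hg : 0 <= p k ^ 2 + q k ^ 2) by nra.
  pose proof (proj1 (Rabs_le_between _ _) (HN k)).
  assert (N k * (p k ^ 2 + q k ^ 2) <= BN * (2 * B ^ 2)) by nra.
  lra.
Qed.

Section AprioriBound.

Variables (K M : nat) (dt dx L Hb mb : R) (p q N V : nat -> Z -> R).
Hypotheses (HK : (1 <= K)%nat) (Hdt : 0 < dt) (Hdx : 0 < dx) (HL : L = INR K * dx).
Hypothesis Hscheme : dvdm_real M dt dx p q N V.
Hypotheses (Hp : forall m, periodicR K (p m)) (Hq : forall m, periodicR K (q m))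
  (HV : forall m, periodicR K (V m)).
Hypotheses (Hmass0 : normsq2 K dx (p 0%nat) (q 0%nat) <= mb)
  (Henergy0 : energy K dx (p 0%nat) (q 0%nat) (N 0%nat) (V 0%nat) <= Hb).

Lemma dvdm_real_potential_bound (j : nat) :
  (j <= M)%nat ->
  normsq K dx (N j) <= potential_bound L Hb mb /\
  normsq K dx (dxpR dx (V j)) <= potential_bound L Hb mb.
Proof.
  intros Hj.
  destruct (dvdm_real_conservation K M dt dx p q N V ltac:(lra) ltac:(lra) Hscheme Hp Hq HV j Hj)
    as [Hmass Henergy].
  apply (energy_controls_potential K dx L Hb mb (p j) (q j)); auto.
  - now rewrite Henergy.
  - now rewrite Hmass.
Qed.

End AprioriBound.

(** * The error identity and the error estimate *)

(* Young-type bounds for the terms of [error_rate] below: the suffixes [1] and [0] mark the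
   time levels [S m] and [m], and [S1], [S0] bound [x^2 + y^2] at these levels. *)
Lemma young_gradient_truncation (T T' X1 X0 Y1 Y0 : R) :
  2 * (T * ((Y1 + Y0) / 2) - T' * ((X1 + X0) / 2))
  <= T ^ 2 + T' ^ 2 + / 2 * (X1 ^ 2 + X0 ^ 2 + Y1 ^ 2 + Y0 ^ 2).
Proof.
  pose proof (two_mul_le_pow2_plus T ((Y1 + Y0) / 2)).
  pose proof (two_mul_le_pow2_plus (- T') ((X1 + X0) / 2)).
  pose proof (pow2_avg_le X1 X0); pose proof (pow2_avg_le Y1 Y0). nra.
Qed.

Lemma young_truncation_source (tr ti N1 N0 n1 n0 x1 x0 y1 y0 a1 a0 b1 b0 S1 S0 B : R) :
  x1 ^ 2 + y1 ^ 2 <= S1 -> x0 ^ 2 + y0 ^ 2 <= S0 ->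
  Rabs a1 <= B -> Rabs a0 <= B -> Rabs b1 <= B -> Rabs b0 <= B ->
  2 * (tr * ((N1 + N0) / 2 * ((y1 + y0) / 2) + (n1 + n0) / 2 * ((b1 + b0) / 2))
       - ti * ((N1 + N0) / 2 * ((x1 + x0) / 2) + (n1 + n0) / 2 * ((a1 + a0) / 2)))
  <= tr ^ 2 + ti ^ 2 + (S1 + S0) / 2 * (N1 ^ 2 + N0 ^ 2) + 2 * B ^ 2 * (n1 ^ 2 + n0 ^ 2).
Proof.
  intros H1 H0 Ha1 Ha0 Hb1 Hb0.
  set (mN := (N1 + N0) / 2); set (mn := (n1 + n0) / 2).
  set (mx := (x1 + x0) / 2); set (my := (y1 + y0) / 2).
  set (ma := (a1 + a0) / 2); set (mb := (b1 + b0) / 2).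
  set (P := mN * my + mn * mb); set (Q := mN * mx + mn * ma).
  assert (HPQ : 2 * (tr * P - ti * Q) <= tr ^ 2 + ti ^ 2 + P ^ 2 + Q ^ 2)
    by (pose proof (two_mul_le_pow2_plus tr P); pose proof (two_mul_le_pow2_plus (- ti) Q); nra).
  assert (HP : P ^ 2 <= 2 * (mN ^ 2 * my ^ 2) + 2 * (mn ^ 2 * mb ^ 2))
    by (pose proof (pow2_plus_le (mN * my) (mn * mb)); unfold P; nra).
  assert (HQ : Q ^ 2 <= 2 * (mN ^ 2 * mx ^ 2) + 2 * (mn ^ 2 * ma ^ 2))
    by (pose proof (pow2_plus_le (mN * mx) (mn * ma)); unfold Q; nra).
  assert (Hxy : mx ^ 2 + my ^ 2 <= (S1 + S0) / 2)
    by (pose proof (pow2_avg_le x1 x0); pose proof (pow2_avg_le y1 y0); unfold mx, my; lra).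
  assert (HN : mN ^ 2 <= (N1 ^ 2 + N0 ^ 2) / 2) by apply pow2_avg_le.
  assert (Hn : mn ^ 2 <= (n1 ^ 2 + n0 ^ 2) / 2) by apply pow2_avg_le.
  assert (Ha : ma ^ 2 <= B ^ 2) by (now apply pow2_avg_le_Rabs).
  assert (Hb : mb ^ 2 <= B ^ 2) by (now apply pow2_avg_le_Rabs).
  assert (T1 : mN ^ 2 * (mx ^ 2 + my ^ 2) <= (N1 ^ 2 + N0 ^ 2) / 2 * ((S1 + S0) / 2))
    by (apply Rmult_le_compat; [apply pow2_ge_0 | nra | exact HN | exact Hxy]).
  assert (T2 : mn ^ 2 * (ma ^ 2 + mb ^ 2) <= (n1 ^ 2 + n0 ^ 2) / 2 * (2 * B ^ 2))
    by (apply Rmult_le_compat; [apply pow2_ge_0 | nra | exact Hn | lra]).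
  nra.
Qed.

Lemma young_potential_gradient (W1 W0 X1 X0 Y1 Y0 x1' x1 y1' y1 x0' x0 y0' y0 S1 S0 : R) :
  x1' ^ 2 + y1' ^ 2 <= S1 -> x1 ^ 2 + y1 ^ 2 <= S1 ->
  x0' ^ 2 + y0' ^ 2 <= S0 -> x0 ^ 2 + y0 ^ 2 <= S0 ->
  - ((W1 + W0) / 2)
    * ((X1 * (x1' + x1) + Y1 * (y1' + y1) + (X0 * (x0' + x0) + Y0 * (y0' + y0))) / 2)
  <= (S1 + S0) / 2 * (W1 ^ 2 + W0 ^ 2) + / 4 * (X1 ^ 2 + X0 ^ 2 + Y1 ^ 2 + Y0 ^ 2).
Proof.
  intros H1' H1 H0' H0.
  set (w := (W1 + W0) / 2).
  assert (Hlevel : forall X x' x Y y' y S, x' ^ 2 + y' ^ 2 <= S -> x ^ 2 + y ^ 2 <= S ->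
            Rabs (w * (X * (x' + x) + Y * (y' + y))) <= / 2 * (4 * S * w ^ 2 + X ^ 2 + Y ^ 2)).
  { intros X x' x Y y' y S Hs' Hs.
    assert (Hsum : w ^ 2 * ((x' + x) ^ 2 + (y' + y) ^ 2) <= w ^ 2 * (4 * S)).
    { apply Rmult_le_compat_l; [apply pow2_ge_0|].
      pose proof (pow2_plus_le x' x); pose proof (pow2_plus_le y' y); lra. }
    apply Rabs_le; split.
    - pose proof (two_mul_le_pow2_plus (w * (x' + x)) (- X)).
      pose proof (two_mul_le_pow2_plus (w * (y' + y)) (- Y)). nra.
    - pose proof (two_mul_le_pow2_plus (w * (x' + x)) X).
      pose proof (two_mul_le_pow2_plus (w * (y' + y)) Y). nra. }
  pose proof (proj1 (Rabs_le_between _ _) (Hlevel X1 x1' x1 Y1 y1' y1 S1 H1' H1)).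
  pose proof (proj1 (Rabs_le_between _ _) (Hlevel X0 x0' x0 Y0 y0' y0 S0 H0' H0)).
  assert (Hw : w ^ 2 <= (W1 ^ 2 + W0 ^ 2) / 2) by apply pow2_avg_le.
  assert (HS : 0 <= S1 + S0) by (pose proof (pow2_ge_0 x1); pose proof (pow2_ge_0 y1);
                                 pose proof (pow2_ge_0 x0); pose proof (pow2_ge_0 y0); lra).
  assert (w ^ 2 * (S1 + S0) <= (W1 ^ 2 + W0 ^ 2) / 2 * (S1 + S0))
    by (apply Rmult_le_compat_r; lra).
  nra.
Qed.

Lemma sq_product_rule_bound (X a' x A Y b' y Bb B : R) :
  Rabs a' <= B -> Rabs A <= B -> Rabs b' <= B -> Rabs Bb <= B ->
  (X * a' + x * A + (Y * b' + y * Bb)) ^ 2 <= 4 * B ^ 2 * (X ^ 2 + Y ^ 2 + x ^ 2 + y ^ 2).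
Proof.
  intros Ha' HA Hb' HB.
  replace (X * a' + x * A + (Y * b' + y * Bb)) with ((X * a' + Y * b') + (x * A + y * Bb)) by ring.
  pose proof (pow2_plus_le (X * a' + Y * b') (x * A + y * Bb)).
  pose proof (pow2_plus_le (X * a') (Y * b')); pose proof (pow2_plus_le (x * A) (y * Bb)).
  pose proof (pow2_mul_le_Rabs X a' B Ha'); pose proof (pow2_mul_le_Rabs x A B HA).
  pose proof (pow2_mul_le_Rabs Y b' B Hb'); pose proof (pow2_mul_le_Rabs y Bb B HB).
  nra.
Qed.

Lemma young_error_potential_gradient (U1 U0 Q1 Q0 R1 R0 B : R) :
  Q1 ^ 2 <= 4 * B ^ 2 * R1 -> Q0 ^ 2 <= 4 * B ^ 2 * R0 ->
  - ((U1 + U0) / 2) * (Q1 + Q0) <= / 4 * (U1 ^ 2 + U0 ^ 2) + 4 * B ^ 2 * (R1 + R0).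
Proof.
  intros H1 H0.
  pose proof (two_mul_le_pow2_plus (- ((U1 + U0) / 2)) (Q1 + Q0)).
  pose proof (pow2_avg_le U1 U0); pose proof (pow2_plus_le Q1 Q0). nra.
Qed.

Lemma young_tauN_source (tN x1 a1 y1 b1 x0 a0 y0 b0 B : R) :
  Rabs a1 <= B -> Rabs a0 <= B -> Rabs b1 <= B -> Rabs b0 <= B ->
  - tN * (x1 * a1 + y1 * b1 + (x0 * a0 + y0 * b0))
  <= / 2 * tN ^ 2 + 2 * B ^ 2 * (x1 ^ 2 + y1 ^ 2 + (x0 ^ 2 + y0 ^ 2)).
Proof.
  intros Ha1 Ha0 Hb1 Hb0.
  pose proof (two_mul_le_pow2_plus (- tN) (x1 * a1 + y1 * b1 + (x0 * a0 + y0 * b0))).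
  pose proof (pow2_plus_le (x1 * a1 + y1 * b1) (x0 * a0 + y0 * b0)).
  pose proof (pow2_plus_le (x1 * a1) (y1 * b1)); pose proof (pow2_plus_le (x0 * a0) (y0 * b0)).
  pose proof (pow2_mul_le_Rabs x1 a1 B Ha1); pose proof (pow2_mul_le_Rabs y1 b1 B Hb1).
  pose proof (pow2_mul_le_Rabs x0 a0 B Ha0); pose proof (pow2_mul_le_Rabs y0 b0 B Hb0).
  nra.
Qed.

Lemma young_time_derivative_source (n1 n0 x1 x0 y1 y0 ta tb B : R) :
  Rabs ta <= B -> Rabs tb <= B ->
  / 2 * (n1 + n0) * ((x1 + x0) * ta + (y1 + y0) * tb)
  <= / 2 * (n1 ^ 2 + n0 ^ 2) + B ^ 2 * (x1 ^ 2 + y1 ^ 2 + (x0 ^ 2 + y0 ^ 2)).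
Proof.
  intros Hta Htb.
  pose proof (two_mul_le_pow2_plus (n1 + n0) ((x1 + x0) * ta + (y1 + y0) * tb)).
  pose proof (pow2_plus_le n1 n0); pose proof (pow2_plus_le ((x1 + x0) * ta) ((y1 + y0) * tb)).
  pose proof (pow2_mul_le_Rabs (x1 + x0) ta B Hta).
  pose proof (pow2_mul_le_Rabs (y1 + y0) tb B Htb).
  pose proof (pow2_plus_le x1 x0); pose proof (pow2_plus_le y1 y0); pose proof (pow2_ge_0 B).
  assert (B ^ 2 * (x1 + x0) ^ 2 <= B ^ 2 * (2 * x1 ^ 2 + 2 * x0 ^ 2))
    by (apply Rmult_le_compat_l; auto).
  assert (B ^ 2 * (y1 + y0) ^ 2 <= B ^ 2 * (2 * y1 ^ 2 + 2 * y0 ^ 2))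
    by (apply Rmult_le_compat_l; auto).
  nra.
Qed.

Definition error_constant (L B BNV : R) : R := 2 * BNV * (/ L + 5) + 1 + 7 * B ^ 2.

Lemma error_constant_pos (L B BNV : R) : 0 < L -> 0 <= BNV -> 0 < error_constant L B BNV.
Proof.
  intros HL HBNV. unfold error_constant.
  pose proof (pow2_ge_0 B). assert (0 < / L) by (apply Rinv_0_lt_compat; lra).
  assert (0 <= 2 * BNV * (/ L + 5)) by (apply Rmult_le_pos; lra). lra.
Qed.

Section ErrorEstimate.

(* [x + i y] is the error [e_E], [a + i b] the exact [E~], [N] and [V] the computed
   [N] and [V], [n] and [v] the errors [e_N] and [e_V], and [tr + i ti], [tN] the local
   truncation errors [tau_E], [tau_N] at the time level [m]. *)
Variables (K : nat) (dt dx : R) (m : nat).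
Variables (x y a b N n V v : nat -> Z -> R) (tr ti tN : Z -> R).
Hypotheses (Hdt : 0 < dt) (Hdx : 0 < dx).
Hypothesis Hper : forall j, (j <= S m)%nat ->
  periodicR K (x j) /\ periodicR K (y j) /\ periodicR K (a j) /\ periodicR K (b j) /\
  periodicR K (V j) /\ periodicR K (v j).
Hypotheses (Htr : periodicR K tr) (Hti : periodicR K ti).
Hypothesis Herr_re : forall k, - dtpR dt y m k = - dx2R dx (mutR x m) k
  + mutR N m k * mutR x m k + mutR n m k * mutR a m k - tr k.
Hypothesis Herr_im : forall k, dtpR dt x m k = - dx2R dx (mutR y m) k
  + mutR N m k * mutR y m k + mutR n m k * mutR b m k - ti k.
Hypothesis Hnum_N : forall k, dtpR dt N m k = dx2R dx (mutR V m) k.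
Hypothesis Herr_N : forall k, dtpR dt n m k = dx2R dx (mutR v m) k - tN k.

Definition err_abs2 (j : nat) (k : Z) : R := x j k ^ 2 + y j k ^ 2.

Definition err_dot (j : nat) (k : Z) : R := x j k * a j k + y j k * b j k.

Definition grad_sq (j : nat) : R :=
  sumR K (fun k => dxpR dx (x j) k ^ 2 + dxpR dx (y j) k ^ 2).

Definition coupling (j : nat) : R :=
  sumR K (fun k => N j k * err_abs2 j k) + 2 * sumR K (fun k => n j k * err_dot j k).

Definition error_rate (k : Z) : R :=
  2 * (dxpR dx tr k * dxpR dx (mutR y m) k - dxpR dx ti k * dxpR dx (mutR x m) k)
  + 2 * (tr k * (mutR N m k * mutR y m k + mutR n m k * mutR b m k)
         - ti k * (mutR N m k * mutR x m k + mutR n m k * mutR a m k))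
  - dxpR dx (mutR V m) k * dxpR dx (mutR err_abs2 m) k
  - 2 * dxpR dx (mutR v m) k * dxpR dx (mutR err_dot m) k
  - 2 * tN k * mutR err_dot m k
  + 2 * mutR n m k * (mutR x m k * dtpR dt a m k + mutR y m k * dtpR dt b m k).

(* The error equations for [e_E] are tested against [x (S m) - x m] and [y (S m) - y m],
   the equation for [N] against [mu_t |e_E|^2] and the one for [e_N] against
   [mu_t (x a + y b)]; the [sbp_term]s vanish after summation. *)
Lemma error_identity_pointwise (k : Z) :
  dxpR dx (x (S m)) k ^ 2 + dxpR dx (y (S m)) k ^ 2 - (dxpR dx (x m) k ^ 2 + dxpR dx (y m) k ^ 2)
  + (N (S m) k * err_abs2 (S m) k + 2 * (n (S m) k * err_dot (S m) k))
  - (N m k * err_abs2 m k + 2 * (n m k * err_dot m k))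
  = dt * error_rate k
    + (2 * sbp_term dx (mutR x m) (fun j => x (S m) j - x m j) k
       + 2 * sbp_term dx (mutR y m) (fun j => y (S m) j - y m j) k
       + dt * (- 2 * sbp_term dx (mutR y m) tr k + 2 * sbp_term dx (mutR x m) ti k
               + sbp_term dx (mutR V m) (mutR err_abs2 m) k
               + 2 * sbp_term dx (mutR v m) (mutR err_dot m) k)).
Proof.
  assert (Hd1 : dx2R dx (mutR x m) k
                = dtpR dt y m k + mutR N m k * mutR x m k + mutR n m k * mutR a m k - tr k)
    by (specialize (Herr_re k); lra).
  assert (Hd2 : dx2R dx (mutR y m) k
                = - dtpR dt x m k + mutR N m k * mutR y m k + mutR n m k * mutR b m k - ti k)
    by (specialize (Herr_im k); lra).
  assert (Hd4 : dx2R dx (mutR v m) k = dtpR dt n m k + tN k) by (rewrite Herr_N; ring).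
  unfold error_rate, sbp_term. rewrite Hd1, Hd2, <- Hnum_N, Hd4.
  unfold err_abs2, err_dot, mutR, dtpR, dxpR. field. lra.
Qed.

Lemma error_identity :
  grad_sq (S m) - grad_sq m + (coupling (S m) - coupling m) = dt * sumR K error_rate.
Proof.
  destruct (Hper m ltac:(lia)) as [Px0 [Py0 [Pa0 [Pb0 [PV0 Pv0]]]]].
  destruct (Hper (S m) ltac:(lia)) as [Px1 [Py1 [Pa1 [Pb1 [PV1 Pv1]]]]].
  assert (Hmu : forall u, periodicR K (u m) -> periodicR K (u (S m)) -> periodicR K (mutR u m))
    by (intros u Hu0 Hu1 k; unfold mutR; now rewrite Hu0, Hu1).
  assert (Hsbp : forall u w, periodicR K u -> periodicR K w -> sumR K (sbp_term dx u w) = 0)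
    by (intros; apply sumR_sbp_term; auto; lra).
  transitivity (sumR K (fun k =>
      dxpR dx (x (S m)) k ^ 2 + dxpR dx (y (S m)) k ^ 2
      - (dxpR dx (x m) k ^ 2 + dxpR dx (y m) k ^ 2)
      + (N (S m) k * err_abs2 (S m) k + 2 * (n (S m) k * err_dot (S m) k))
      - (N m k * err_abs2 m k + 2 * (n m k * err_dot m k)))).
  { unfold grad_sq, coupling.
    rewrite !sumR_minus, !sumR_plus, !sumR_scal, !sumR_minus, !sumR_plus. lra. }
  rewrite (sumR_ext _ _ _ error_identity_pointwise).
  rewrite !sumR_plus, !sumR_scal, !sumR_plus, !sumR_scal, !Hsbp; try ring;
    try apply Hmu; auto; intro k; unfold err_abs2, err_dot;
    now rewrite ?Px0, ?Px1, ?Py0, ?Py1, ?Pa0, ?Pa1, ?Pb0, ?Pb1.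
Qed.

Variables (L B BNV tb : R).
Hypotheses (HK : (1 <= K)%nat) (HL : L = INR K * dx).
Hypothesis Hexact : forall j, (j <= S m)%nat -> forall k,
  Rabs (a j k) <= B /\ Rabs (b j k) <= B /\
  Rabs (dxpR dx (a j) k) <= B /\ Rabs (dxpR dx (b j) k) <= B.
Hypothesis Hexact_dt : forall k, Rabs (dtpR dt a m k) <= B /\ Rabs (dtpR dt b m k) <= B.

Lemma error_rate_pointwise (S1 S0 : R) :
  (forall k, x (S m) k ^ 2 + y (S m) k ^ 2 <= S1) -> (forall k, x m k ^ 2 + y m k ^ 2 <= S0) ->
  forall k, error_rate k <=
    dxpR dx tr k ^ 2 + dxpR dx ti k ^ 2 + (tr k ^ 2 + ti k ^ 2) + / 2 * tN k ^ 2
    + (S1 + S0) / 2 * (N (S m) k ^ 2 + N m k ^ 2 + dxpR dx (V (S m)) k ^ 2 + dxpR dx (V m) k ^ 2)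
    + (3 / 4 + 4 * B ^ 2) * (dxpR dx (x (S m)) k ^ 2 + dxpR dx (y (S m)) k ^ 2
                             + dxpR dx (x m) k ^ 2 + dxpR dx (y m) k ^ 2)
    + 7 * B ^ 2 * (x (S m) k ^ 2 + y (S m) k ^ 2 + x m k ^ 2 + y m k ^ 2)
    + (2 * B ^ 2 + / 2) * (n (S m) k ^ 2 + n m k ^ 2)
    + / 4 * (dxpR dx (v (S m)) k ^ 2 + dxpR dx (v m) k ^ 2).
Proof.
  intros Sob1 Sob0 k.
  destruct (Hexact (S m) ltac:(lia) k) as [Ha1 [Hb1 [Hda1 Hdb1]]].
  destruct (Hexact m ltac:(lia) k) as [Ha0 [Hb0 [Hda0 Hdb0]]].
  destruct (Hexact (S m) ltac:(lia) (k + 1)%Z) as [Ha1' [Hb1' _]].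
  destruct (Hexact m ltac:(lia) (k + 1)%Z) as [Ha0' [Hb0' _]].
  destruct (Hexact_dt k) as [Hta Htb].
  pose proof (young_gradient_truncation (dxpR dx tr k) (dxpR dx ti k)
    (dxpR dx (x (S m)) k) (dxpR dx (x m) k) (dxpR dx (y (S m)) k) (dxpR dx (y m) k)) as P1.
  pose proof (young_truncation_source (tr k) (ti k) (N (S m) k) (N m k) (n (S m) k) (n m k)
    (x (S m) k) (x m k) (y (S m) k) (y m k) (a (S m) k) (a m k) (b (S m) k) (b m k) S1 S0 B
    (Sob1 k) (Sob0 k) Ha1 Ha0 Hb1 Hb0) as P2.
  pose proof (young_potential_gradient (dxpR dx (V (S m)) k) (dxpR dx (V m) k)
    (dxpR dx (x (S m)) k) (dxpR dx (x m) k) (dxpR dx (y (S m)) k) (dxpR dx (y m) k)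
    (x (S m) (k + 1)%Z) (x (S m) k) (y (S m) (k + 1)%Z) (y (S m) k)
    (x m (k + 1)%Z) (x m k) (y m (k + 1)%Z) (y m k) S1 S0
    (Sob1 _) (Sob1 _) (Sob0 _) (Sob0 _)) as P3.
  pose proof (sq_product_rule_bound (dxpR dx (x (S m)) k) (a (S m) (k + 1)%Z) (x (S m) k)
    (dxpR dx (a (S m)) k) (dxpR dx (y (S m)) k) (b (S m) (k + 1)%Z) (y (S m) k)
    (dxpR dx (b (S m)) k) B Ha1' Hda1 Hb1' Hdb1) as Q1.
  pose proof (sq_product_rule_bound (dxpR dx (x m) k) (a m (k + 1)%Z) (x m k)
    (dxpR dx (a m) k) (dxpR dx (y m) k) (b m (k + 1)%Z) (y m k)
    (dxpR dx (b m) k) B Ha0' Hda0 Hb0' Hdb0) as Q0.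
  pose proof (young_error_potential_gradient (dxpR dx (v (S m)) k) (dxpR dx (v m) k)
    _ _ _ _ B Q1 Q0) as P4.
  pose proof (young_tauN_source (tN k) (x (S m) k) (a (S m) k) (y (S m) k) (b (S m) k)
    (x m k) (a m k) (y m k) (b m k) B Ha1 Ha0 Hb1 Hb0) as P5.
  pose proof (young_time_derivative_source (n (S m) k) (n m k) (x (S m) k) (x m k)
    (y (S m) k) (y m k) _ _ B Hta Htb) as P6.
  unfold error_rate, err_abs2, err_dot, mutR, dxpR, dtpR in *.
  lra.
Qed.

Hypothesis Hpot : forall j, (j <= S m)%nat ->
  normsq K dx (N j) <= BNV /\ normsq K dx (dxpR dx (V j)) <= BNV.
Hypotheses (Htau : normsq2 K dx tr ti <= tb ^ 2)
  (Htau_dx : normsq2 K dx (dxpR dx tr) (dxpR dx ti) <= tb ^ 2)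
  (Htau_N : normsq K dx tN <= tb ^ 2).

Definition error_energy (j : nat) : R :=
  normsq2 K dx (x j) (y j) + normsq2 K dx (dxpR dx (x j)) (dxpR dx (y j))
  + normsq K dx (n j) + normsq K dx (dxpR dx (v j)).

(* The discrete Sobolev bound for [|e_E|^2] at level [j], with [eps = 1]. *)
Definition sup_bound (j : nat) : R :=
  normsq2 K dx (x j) (y j) / L + 1 * normsq2 K dx (dxpR dx (x j)) (dxpR dx (y j))
  + 4 / 1 * normsq2 K dx (x j) (y j).

Lemma sup_bound_le (j : nat) :
  0 <= sup_bound j <= (/ L + 5) * (normsq2 K dx (x j) (y j)
                                   + normsq2 K dx (dxpR dx (x j)) (dxpR dx (y j))).
Proof.
  assert (HiL : 0 <= / L)
    by (left; apply Rinv_0_lt_compat; rewrite HL;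
        apply Rmult_lt_0_compat; [apply lt_0_INR; lia | lra]).
  pose proof (normsq2_nonneg K dx (x j) (y j) ltac:(lra)) as Hm.
  pose proof (normsq2_nonneg K dx (dxpR dx (x j)) (dxpR dx (y j)) ltac:(lra)) as HG.
  pose proof (Rmult_le_pos _ _ Hm HiL); pose proof (Rmult_le_pos _ _ HiL HG).
  unfold sup_bound. split; lra.
Qed.

Lemma error_rate_sum_bound :
  sumR K error_rate * dx
  <= 5 / 2 * tb ^ 2 + 2 * BNV * (sup_bound (S m) + sup_bound m)
     + (1 + 7 * B ^ 2) * (error_energy (S m) + error_energy m).
Proof.
  destruct (Hper m ltac:(lia)) as [Px0 [Py0 _]]; destruct (Hper (S m) ltac:(lia)) as [Px1 [Py1 _]].
  destruct (Hpot m ltac:(lia)) as [HN0 HV0]; destruct (Hpot (S m) ltac:(lia)) as [HN1 HV1].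
  pose proof (sup_bound_le m) as HS0; pose proof (sup_bound_le (S m)) as HS1.
  set (S1 := sup_bound (S m)) in *; set (S0 := sup_bound m) in *.
  assert (Hsob : forall j, periodicR K (x j) -> periodicR K (y j) ->
                 forall k, x j k ^ 2 + y j k ^ 2 <= sup_bound j)
    by (intros j Hxj Hyj k; apply discrete_sobolev; auto; lra).
  eapply Rle_trans.
  { apply Rmult_le_compat_r; [lra|]. apply sumR_le.
    apply (error_rate_pointwise S1 S0); now apply Hsob. }
  set (Npot := normsq K dx (N (S m)) + normsq K dx (N m)
               + normsq K dx (dxpR dx (V (S m))) + normsq K dx (dxpR dx (V m))).
  assert (Hpot_sum : (S1 + S0) / 2 * Npot <= 2 * BNV * (S1 + S0))
    by (apply Rle_trans with ((S1 + S0) / 2 * (4 * BNV));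
        [apply Rmult_le_compat_l; unfold Npot; lra | lra]).
  pose proof (pow2_ge_0 B).
  pose proof (normsq2_nonneg K dx (x (S m)) (y (S m)) ltac:(lra)).
  pose proof (normsq2_nonneg K dx (x m) (y m) ltac:(lra)).
  pose proof (normsq2_nonneg K dx (dxpR dx (x (S m))) (dxpR dx (y (S m))) ltac:(lra)).
  pose proof (normsq2_nonneg K dx (dxpR dx (x m)) (dxpR dx (y m)) ltac:(lra)).
  pose proof (normsq_nonneg K dx (n (S m)) ltac:(lra)).
  pose proof (normsq_nonneg K dx (n m) ltac:(lra)).
  pose proof (normsq_nonneg K dx (dxpR dx (v (S m))) ltac:(lra)).
  pose proof (normsq_nonneg K dx (dxpR dx (v m)) ltac:(lra)).
  match goal with |- ?lhs <= _ => replace lhs with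
    (normsq2 K dx (dxpR dx tr) (dxpR dx ti) + normsq2 K dx tr ti + / 2 * normsq K dx tN
     + (S1 + S0) / 2 * Npot
     + (3 / 4 + 4 * B ^ 2) * (normsq2 K dx (dxpR dx (x (S m))) (dxpR dx (y (S m)))
                              + normsq2 K dx (dxpR dx (x m)) (dxpR dx (y m)))
     + 7 * B ^ 2 * (normsq2 K dx (x (S m)) (y (S m)) + normsq2 K dx (x m) (y m))
     + (2 * B ^ 2 + / 2) * (normsq K dx (n (S m)) + normsq K dx (n m))
     + / 4 * (normsq K dx (dxpR dx (v (S m))) + normsq K dx (dxpR dx (v m))))
  end.
  2: { unfold Npot, normsq, normsq2. repeat rewrite ?sumR_plus, ?sumR_scal. ring. }
  unfold error_energy. nra.
Qed.

Lemma error_step_estimate :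
  (grad_sq (S m) - grad_sq m + (coupling (S m) - coupling m)) * dx
  <= dt * (error_constant L B BNV * (error_energy (S m) + error_energy m) + 4 * tb ^ 2).
Proof.
  rewrite error_identity, Rmult_assoc. apply Rmult_le_compat_l; [lra|].
  eapply Rle_trans; [apply error_rate_sum_bound|].
  assert (HBNV : 0 <= BNV)
    by (eapply Rle_trans; [apply (normsq_nonneg K dx (N m)); lra | apply (Hpot m); lia]).
  pose proof (sup_bound_le m) as HS0; pose proof (sup_bound_le (S m)) as HS1.
  assert (HnV : forall j, 0 <= normsq K dx (n j) + normsq K dx (dxpR dx (v j)))
    by (intro j; pose proof (normsq_nonneg K dx (n j));
        pose proof (normsq_nonneg K dx (dxpR dx (v j))); lra).
  pose proof (HnV m) as Hnv0; pose proof (HnV (S m)) as Hnv1.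
  assert (Hsup : 2 * BNV * (sup_bound (S m) + sup_bound m)
                 <= 2 * BNV * (/ L + 5) * (error_energy (S m) + error_energy m)).
  { rewrite (Rmult_assoc (2 * BNV)). apply Rmult_le_compat_l; [lra|].
    assert (HiL : 0 < / L) by (apply Rinv_0_lt_compat; rewrite HL;
                              apply Rmult_lt_0_compat; [apply lt_0_INR; lia | lra]).
    pose proof (Rmult_le_pos (/ L + 5) _ ltac:(lra) Hnv0).
    pose proof (Rmult_le_pos (/ L + 5) _ ltac:(lra) Hnv1).
    unfold error_energy. lra. }
  unfold error_constant. nra.
Qed.

End ErrorEstimate.

(** * Bounds for the smooth solution *)

Lemma continuous2_locally_bounded (g : R -> R -> R) (u v : R) :
  continuous (fun p : R * R => g (fst p) (snd p)) (u, v) ->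
  exists d : posreal, forall t x,
    Rabs (t - u) < d -> Rabs (x - v) < d -> Rabs (g t x - g u v) < 1.
Proof.
  intros Hc.
  destruct (Hc _ (locally_ball (g u v) (mkposreal 1 Rlt_0_1))) as [d Hd].
  exists d; intros t x Ht Hx. apply (Hd (t, x)). now split.
Qed.

Lemma continuous2_bounded_rectangle (g : R -> R -> R) (a b t0 t1 x0 x1 : R) :
  a < t0 -> t1 < b ->
  (forall t x, a < t < b -> continuous (fun p : R * R => g (fst p) (snd p)) (t, x)) ->
  exists Mg, forall t x, t0 <= t <= t1 -> x0 <= x <= x1 -> Rabs (g t x) <= Mg.
Proof.
  intros Ha Hb Hc.
  assert (Hd : forall p : Compactness.Tn 2 R, exists d : posreal, a < fst p < b ->
            forall t x, Rabs (t - fst p) < d -> Rabs (x - fst (snd p)) < d ->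
            Rabs (g t x - g (fst p) (fst (snd p))) < 1).
  { intros [u [v w]]; simpl. destruct (classic (a < u < b)) as [Hu | Hu].
    - destruct (continuous2_locally_bounded g u v (Hc u v Hu)) as [d Hd]. now exists d.
    - exists (mkposreal 1 Rlt_0_1). intro; contradiction. }
  set (delta := fun p => proj1_sig (constructive_indefinite_description _ (Hd p))).
  assert (Hdelta : forall p, a < fst p < b -> forall t x,
            Rabs (t - fst p) < delta p -> Rabs (x - fst (snd p)) < delta p ->
            Rabs (g t x - g (fst p) (fst (snd p))) < 1)
    by (intro p; exact (proj2_sig (constructive_indefinite_description _ (Hd p)))).
  (* Finitely many of the neighbourhoods on which [g] varies by less than 1 cover the
     rectangle. *)
  pose proof (compactness_list 2 (t0, (x0, tt)) (t1, (x1, tt)) delta) as Hcover.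
  apply NNPP; intro Hnot; apply Hcover; intros [l Hl]; apply Hnot.
  exists (MaxRlist (map (fun p : Compactness.Tn 2 R => Rabs (g (fst p) (fst (snd p))) + 1) l)).
  intros t x Ht Hx.
  destruct (Hl (t, (x, tt)) ltac:(simpl; auto)) as [[u [v w]] [Hin [Hbd Hcl]]].
  simpl in Hbd, Hcl. destruct Hbd as [Hu _]. destruct Hcl as [Hct [Hcx _]].
  specialize (Hdelta (u, (v, w)) ltac:(simpl; lra) t x Hct Hcx). simpl in Hdelta.
  pose proof (MaxRlist_P1 _ _ (in_map (fun p : Compactness.Tn 2 R =>
                Rabs (g (fst p) (fst (snd p))) + 1) _ _ Hin)) as Hmax.
  cbn [fst snd] in Hmax.
  pose proof (Rabs_triang_inv (g t x) (g u v)). lra.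
Qed.

Lemma difference_quotient_bound (f df : R -> R) (u w Bd : R) :
  u < w ->
  (forall y, u <= y <= w -> is_derive f y (df y)) ->
  (forall y, u <= y <= w -> Rabs (df y) <= Bd) ->
  Rabs ((f w - f u) / (w - u)) <= Bd.
Proof.
  intros Huw Hd Hb.
  destruct (MVT_gen f u w df) as [c [Hc Heq]].
  - intros y Hy. rewrite Rmin_left, Rmax_right in Hy by lra. apply Hd; lra.
  - intros y Hy. rewrite Rmin_left, Rmax_right in Hy by lra.
    apply continuity_pt_filterlim, (ex_derive_continuous (K := R_AbsRing) (V := R_NormedModule)).
    exists (df y). apply Hd; lra.
  - rewrite Rmin_left, Rmax_right in Hc by lra.
    rewrite Heq. replace (df c * (w - u) / (w - u)) with (df c) by (field; lra). apply Hb; lra.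
Qed.

Lemma smooth_strip_bounds (a b T X : R) (f : R -> R -> R) :
  smooth_strip a b f -> a < 0 -> T < b -> 0 <= T -> 0 <= X ->
  exists B, 0 <= B /\
    (forall t x, 0 <= t <= T -> 0 <= x <= X -> Rabs (f t x) <= B) /\
    (forall t x h, 0 <= t <= T -> 0 <= x -> 0 < h -> x + h <= X ->
       Rabs ((f t (x + h) - f t x) / h) <= B) /\
    (forall t s x, 0 <= t -> t < s -> s <= T -> 0 <= x <= X ->
       Rabs ((f s x - f t x) / (s - t)) <= B).
Proof.
  intros [D [HD0 HD]] Ha Hb HT HX.
  assert (Hcont : forall i j, exists Bij, forall t x, 0 <= t <= T -> 0 <= x <= X ->
                    Rabs (D i j t x) <= Bij).
  { intros i j. apply (continuous2_bounded_rectangle (D i j) a b); [lra | lra |].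
    intros t x Ht. apply (HD i j t x Ht). }
  destruct (Hcont 0%nat 0%nat) as [B0 H0].
  destruct (Hcont 0%nat 1%nat) as [B1 H1].
  destruct (Hcont 1%nat 0%nat) as [B2 H2].
  assert (HB0 : 0 <= B0) by (eapply Rle_trans; [apply Rabs_pos | apply (H0 0 0); lra]).
  assert (HB1 : 0 <= B1) by (eapply Rle_trans; [apply Rabs_pos | apply (H1 0 0); lra]).
  assert (HB2 : 0 <= B2) by (eapply Rle_trans; [apply Rabs_pos | apply (H2 0 0); lra]).
  exists (B0 + B1 + B2). rewrite <- HD0. split; [lra | split; [| split]].
  - intros t x Ht Hx. specialize (H0 t x Ht Hx). lra.
  - intros t x h Ht Hx Hh Hxh.
    replace h with (x + h - x) at 2 by ring.
    apply (difference_quotient_bound (fun y => D 0%nat 0%nat t y) (fun y => D 0%nat 1%nat t y));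
      [lra | |].
    + intros y Hy. apply (HD 0%nat 0%nat t y ltac:(lra)).
    + intros y Hy. specialize (H1 t y Ht ltac:(lra)). lra.
  - intros t s x Ht Hts Hs Hx.
    apply (difference_quotient_bound (fun y => D 0%nat 0%nat y x) (fun y => D 1%nat 0%nat y x));
      [lra | |].
    + intros y Hy. apply (HD 0%nat 0%nat y x ltac:(lra)).
    + intros y Hy. specialize (H2 y x ltac:(lra) Hx). lra.
Qed.

(** * Complex grid functions *)

Definition reC (u : Z -> C) : Z -> R := fun k => fst (u k).
Definition imC (u : Z -> C) : Z -> R := fun k => snd (u k).
Definition reT (u : nat -> Z -> C) : nat -> Z -> R := fun j => reC (u j).
Definition imT (u : nat -> Z -> C) : nat -> Z -> R := fun j => imC (u j).

Lemma periodicC_reC (K : nat) (u : Z -> C) : periodicC K u -> periodicR K (reC u).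
Proof. intros Hu k; unfold reC; now rewrite Hu. Qed.

Lemma periodicC_imC (K : nat) (u : Z -> C) : periodicC K u -> periodicR K (imC u).
Proof. intros Hu k; unfold imC; now rewrite Hu. Qed.

Lemma fst_div_RtoC (z : C) (r : R) : r <> 0 -> fst (z / RtoC r)%C = fst z / r.
Proof. destruct z as [a b]; intros Hr. unfold Cdiv, Cinv, Cmult, RtoC; simpl. field; auto. Qed.

Lemma snd_div_RtoC (z : C) (r : R) : r <> 0 -> snd (z / RtoC r)%C = snd z / r.
Proof. destruct z as [a b]; intros Hr. unfold Cdiv, Cinv, Cmult, RtoC; simpl. field; auto. Qed.

Lemma Cmod_sq (z : C) : Cmod z ^ 2 = fst z ^ 2 + snd z ^ 2.
Proof. unfold Cmod. rewrite pow2_sqrt; [reflexivity | nra]. Qed.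

Lemma Re_ipC (K : nat) (dx : R) (v w : Z -> C) :
  Re (ipC K dx v w) = sumR K (fun k => reC v k * reC w k + imC v k * imC w k) * dx.
Proof.
  assert (Hfst : forall f : Z -> C, fst (sumC K f) = sumR K (fun k => fst (f k))).
  { intro f; induction K as [|K IH]; [reflexivity|]. simpl. now rewrite IH. }
  unfold ipC, Re. cbn [fst snd Cmult RtoC]. rewrite Hfst, Rmult_0_r, Rminus_0_r.
  f_equal. apply sumR_ext; intro k. unfold reC, imC. destruct (v k), (w k). simpl. ring.
Qed.

Lemma normC_sq (K : nat) (dx : R) (v : Z -> C) :
  0 <= dx -> normC K dx v ^ 2 = normsq2 K dx (reC v) (imC v).
Proof.
  intros Hdx. unfold normC. rewrite Re_ipC, pow2_sqrt.
  - unfold normsq2. f_equal. apply sumR_ext; intro; ring.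
  - apply Rmult_le_pos; [apply sumR_nonneg; intro; nra | exact Hdx].
Qed.

Lemma normR_sq (K : nat) (dx : R) (v : Z -> R) :
  0 <= dx -> normR K dx v ^ 2 = normsq K dx v.
Proof.
  intros Hdx. unfold normR, ipR. rewrite pow2_sqrt.
  - unfold normsq. f_equal. apply sumR_ext; intro; ring.
  - apply Rmult_le_pos; [apply sumR_nonneg; intro; nra | exact Hdx].
Qed.

Section ComplexToReal.

Variables (dt dx : R).
Hypotheses (Hdt : dt <> 0) (Hdx : dx <> 0).

Lemma fst_dxpC (u : Z -> C) (k : Z) : fst (dxpC dx u k) = dxpR dx (reC u) k.
Proof. unfold dxpC, dxpR. rewrite fst_div_RtoC by exact Hdx. reflexivity. Qed.

Lemma snd_dxpC (u : Z -> C) (k : Z) : snd (dxpC dx u k) = dxpR dx (imC u) k.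
Proof. unfold dxpC, dxpR. rewrite snd_div_RtoC by exact Hdx. reflexivity. Qed.

Lemma fst_dx2C (u : Z -> C) (k : Z) : fst (dx2C dx u k) = dx2R dx (reC u) k.
Proof.
  unfold dx2C, dx2R. rewrite fst_div_RtoC by (apply pow_nonzero; exact Hdx).
  unfold reC; simpl. f_equal. ring.
Qed.

Lemma snd_dx2C (u : Z -> C) (k : Z) : snd (dx2C dx u k) = dx2R dx (imC u) k.
Proof.
  unfold dx2C, dx2R. rewrite snd_div_RtoC by (apply pow_nonzero; exact Hdx).
  unfold imC; simpl. f_equal. ring.
Qed.

Lemma fst_dtpC (u : nat -> Z -> C) (m : nat) (k : Z) :
  fst (dtpC dt u m k) = dtpR dt (reT u) m k.
Proof. unfold dtpC, dtpR. rewrite fst_div_RtoC by exact Hdt. reflexivity. Qed.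

Lemma snd_dtpC (u : nat -> Z -> C) (m : nat) (k : Z) :
  snd (dtpC dt u m k) = dtpR dt (imT u) m k.
Proof. unfold dtpC, dtpR. rewrite snd_div_RtoC by exact Hdt. reflexivity. Qed.

End ComplexToReal.

Lemma normC_dxpC_sq (K : nat) (dx : R) (u : Z -> C) :
  0 < dx -> normC K dx (dxpC dx u) ^ 2 = normsq2 K dx (dxpR dx (reC u)) (dxpR dx (imC u)).
Proof.
  intros Hdx. rewrite normC_sq by lra. unfold normsq2. f_equal.
  apply sumR_ext; intro k. unfold reC at 1, imC at 1.
  now rewrite fst_dxpC, snd_dxpC by lra.
Qed.

Lemma fst_mutC (u : nat -> Z -> C) (m : nat) (k : Z) : fst (mutC u m k) = mutR (reT u) m k.
Proof. unfold mutC, mutR. rewrite fst_div_RtoC by lra. reflexivity. Qed.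

Lemma snd_mutC (u : nat -> Z -> C) (m : nat) (k : Z) : snd (mutC u m k) = mutR (imT u) m k.
Proof. unfold mutC, mutR. rewrite snd_div_RtoC by lra. reflexivity. Qed.

Lemma reC_mutC (u : nat -> Z -> C) (m : nat) : reC (mutC u m) = mutR (reT u) m.
Proof. apply functional_extensionality; intro k. apply fst_mutC. Qed.

Lemma imC_mutC (u : nat -> Z -> C) (m : nat) : imC (mutC u m) = mutR (imT u) m.
Proof. apply functional_extensionality; intro k. apply snd_mutC. Qed.

Lemma dvdm_scheme_real (M : nat) (dt dx : R) (Es : nat -> Z -> C) (Ns Vs : nat -> Z -> R) :
  dt <> 0 -> dx <> 0 -> dvdm_scheme M dt dx Es Ns Vs ->
  dvdm_real M dt dx (reT Es) (imT Es) Ns Vs.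
Proof.
  intros Hdt Hdx Hscheme m k Hm. destruct (Hscheme m k Hm) as [HE [HN HV]].
  pose proof (f_equal fst HE) as Hre; pose proof (f_equal snd HE) as Him.
  cbn [fst snd Cmult Cplus Copp Ci RtoC] in Hre, Him.
  rewrite snd_dtpC, fst_dx2C, reC_mutC in Hre by assumption.
  rewrite fst_dtpC, snd_dx2C, imC_mutC in Him by assumption.
  rewrite fst_mutC in Hre. rewrite snd_mutC in Him.
  split; [lra | split; [lra | split; [exact HN |]]].
  unfold dtpR, mutR, abs2 in HV |- *. rewrite !Cmod_sq in HV. exact HV.
Qed.

Section ErrorEquations.

Variables (M : nat) (dt dx : R) (E : R -> R -> C) (N V : R -> R -> R).
Variables (Es : nat -> Z -> C) (Ns Vs : nat -> Z -> R).
Hypotheses (Hdt : dt <> 0) (Hdx : dx <> 0).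
Hypothesis Hscheme : dvdm_scheme M dt dx Es Ns Vs.

Let Et := exactC dt dx E.
Let eE := errC Es Et.
Let eN := errR Ns (exactR dt dx N).
Let eV := errR Vs (exactR dt dx V).

Lemma fst_tauE (m : nat) (k : Z) :
  fst (tauE dt dx E N m k) = - dtpR dt (imT Et) m k + dx2R dx (mutR (reT Et) m) k
                             - mutR (exactR dt dx N) m k * mutR (reT Et) m k.
Proof.
  unfold tauE. cbn [fst snd Cmult Cplus Cminus Copp Ci RtoC].
  rewrite snd_dtpC, fst_dx2C, reC_mutC by assumption.
  rewrite fst_mutC. unfold Et. lra.
Qed.

Lemma snd_tauE (m : nat) (k : Z) :
  snd (tauE dt dx E N m k) = dtpR dt (reT Et) m k + dx2R dx (mutR (imT Et) m) k
                             - mutR (exactR dt dx N) m k * mutR (imT Et) m k.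
Proof.
  unfold tauE. cbn [fst snd Cmult Cplus Cminus Copp Ci RtoC].
  rewrite fst_dtpC, snd_dx2C, imC_mutC by assumption.
  rewrite snd_mutC. unfold Et. lra.
Qed.

Lemma dvdm_error_equations (m : nat) (k : Z) :
  (m < M)%nat ->
  - dtpR dt (imT eE) m k = - dx2R dx (mutR (reT eE) m) k + mutR Ns m k * mutR (reT eE) m k
                           + mutR eN m k * mutR (reT Et) m k - reC (tauE dt dx E N m) k /\
  dtpR dt (reT eE) m k = - dx2R dx (mutR (imT eE) m) k + mutR Ns m k * mutR (imT eE) m k
                         + mutR eN m k * mutR (imT Et) m k - imC (tauE dt dx E N m) k /\
  dtpR dt eN m k = dx2R dx (mutR eV m) k - tauN dt dx N V m k.
Proof.
  intros Hm.
  destruct (dvdm_scheme_real M dt dx Es Ns Vs Hdt Hdx Hscheme m k Hm) as [Hre [Him [HN _]]].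
  change (reC (tauE dt dx E N m) k) with (fst (tauE dt dx E N m k)).
  change (imC (tauE dt dx E N m) k) with (snd (tauE dt dx E N m k)).
  rewrite fst_tauE, snd_tauE.
  unfold eE, eN, eV, Et, tauN, reT, imT, reC, imC, errC, errR, mutR, dtpR, dx2R in *.
  cbn [fst snd Cminus Cplus Copp] in *.
  repeat split; lra.
Qed.

End ErrorEquations.

Section EnergyTerms.

Variables (K : nat) (dt dx : R) (E : R -> R -> C) (N V : R -> R -> R).
Variables (Es : nat -> Z -> C) (Ns Vs : nat -> Z -> R).
Hypothesis Hdx : 0 < dx.

Let Et := exactC dt dx E.
Let eE := errC Es Et.
Let eN := errR Ns (exactR dt dx N).
Let eV := errR Vs (exactR dt dx V).

Lemma normC_dxpC_grad_sq (j : nat) :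
  normC K dx (dxpC dx (eE j)) ^ 2 = grad_sq K dx (reT eE) (imT eE) j * dx.
Proof. rewrite normC_dxpC_sq by lra. reflexivity. Qed.

Lemma Aterm_coupling (j : nat) :
  Aterm K dt dx E N Es Ns j = coupling K (reT eE) (imT eE) (reT Et) (imT Et) Ns eN j * dx.
Proof.
  unfold Aterm, coupling, err_abs2, err_dot, ipR.
  rewrite Re_ipC, Rmult_plus_distr_r, (Rmult_assoc 2).
  f_equal; [f_equal | f_equal; f_equal]; apply sumR_ext; intro k;
    unfold abs2, eN, eE, Et, errR, reT, imT, reC, imC; rewrite ?Cmod_sq;
    cbn [fst snd Cmult RtoC]; ring.
Qed.

Lemma err_energy_error_energy (j : nat) :
  err_energy K dt dx E N V Es Ns Vs j = error_energy K dx (reT eE) (imT eE) eN eV j.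
Proof.
  unfold err_energy, error_energy. rewrite normC_sq, normC_dxpC_sq, !normR_sq by lra.
  reflexivity.
Qed.

End EnergyTerms.

(** * The exact solution on the grid *)

Section GridSamples.

Variables (K : nat) (dx L : R) (f : R -> R).
Hypotheses (HK : (1 <= K)%nat) (Hdx : 0 < dx) (HL : L = INR K * dx).
Hypothesis Hf : forall x, f (x + L) = f x.

Lemma grid_periodic : periodicR K (fun k => f (IZR k * dx)).
Proof.
  intro k; cbv beta. rewrite plus_IZR, <- INR_IZR_INZ.
  replace ((IZR k + INR K) * dx) with (IZR k * dx + L) by (rewrite HL; ring). apply Hf.
Qed.

Lemma grid_point_range (i : nat) : (i <= K)%nat -> 0 <= IZR (Z.of_nat i) * dx <= L.
Proof.
  intros Hi. rewrite <- INR_IZR_INZ, HL.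
  pose proof (pos_INR i); pose proof (le_INR _ _ Hi). nra.
Qed.

Lemma grid_sample_bounded (B : R) :
  (forall x, 0 <= x <= 2 * L -> Rabs (f x) <= B) -> forall k, Rabs (f (IZR k * dx)) <= B.
Proof.
  intros Hb. apply (periodicR_bounded K _ B HK grid_periodic).
  intros i Hi. apply Hb. pose proof (grid_point_range i ltac:(lia)). lra.
Qed.

Lemma grid_dxpR_bounded (B : R) :
  (forall x h, 0 <= x -> 0 < h -> x + h <= 2 * L -> Rabs ((f (x + h) - f x) / h) <= B) ->
  forall k, Rabs (dxpR dx (fun i => f (IZR i * dx)) k) <= B.
Proof.
  intros Hb. apply (periodicR_bounded K _ B HK (periodicR_dxpR K dx _ grid_periodic)).
  intros i Hi. unfold dxpR. rewrite plus_IZR, Rmult_plus_distr_r, Rmult_1_l.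
  pose proof (grid_point_range i ltac:(lia)).
  assert (dx <= L) by (rewrite HL; pose proof (le_INR 1 K HK); simpl in *; nra).
  apply Hb; lra.
Qed.

End GridSamples.

Definition solution_bounds (L T : R) (E : R -> R -> C) (N V : R -> R -> R) (B BN BV : R)
  : Prop :=
  (forall t x, 0 <= t <= T -> 0 <= x <= 2 * L ->
     Rabs (ReF E t x) <= B /\ Rabs (ImF E t x) <= B) /\
  (forall t x h, 0 <= t <= T -> 0 <= x -> 0 < h -> x + h <= 2 * L ->
     Rabs ((ReF E t (x + h) - ReF E t x) / h) <= B /\
     Rabs ((ImF E t (x + h) - ImF E t x) / h) <= B) /\
  (forall t s x, 0 <= t -> t < s -> s <= T -> 0 <= x <= 2 * L ->
     Rabs ((ReF E s x - ReF E t x) / (s - t)) <= B /\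
     Rabs ((ImF E s x - ImF E t x) / (s - t)) <= B) /\
  (forall x, 0 <= x <= 2 * L -> Rabs (N 0 x) <= BN) /\
  (forall x h, 0 <= x -> 0 < h -> x + h <= 2 * L -> Rabs ((V 0 (x + h) - V 0 x) / h) <= BV).

Lemma zakharov_solution_bounds (L T : R) (E : R -> R -> C) (N V : R -> R -> R) :
  0 < L -> 0 < T -> zakharov_solution L T E N V ->
  exists B BN BV, 0 <= BN /\ solution_bounds L T E N V B BN BV.
Proof.
  intros HL HT [[eps [Heps [SEr [SEi [SN SV]]]]] _].
  destruct (smooth_strip_bounds _ _ T (2 * L) _ SEr ltac:(lra) ltac:(lra) ltac:(lra) ltac:(lra))
    as [Bp [HBp [Bp0 [Bp1 Bp2]]]].
  destruct (smooth_strip_bounds _ _ T (2 * L) _ SEi ltac:(lra) ltac:(lra) ltac:(lra) ltac:(lra))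
    as [Bq [HBq [Bq0 [Bq1 Bq2]]]].
  destruct (smooth_strip_bounds _ _ T (2 * L) _ SN ltac:(lra) ltac:(lra) ltac:(lra) ltac:(lra))
    as [BN [HBN [BN0 _]]].
  destruct (smooth_strip_bounds _ _ T (2 * L) _ SV ltac:(lra) ltac:(lra) ltac:(lra) ltac:(lra))
    as [BV [_ [_ [BV1 _]]]].
  exists (Bp + Bq), BN, BV. split; [exact HBN |].
  split; [| split; [| split; [| split]]].
  - intros t x Ht Hx. specialize (Bp0 t x Ht Hx); specialize (Bq0 t x Ht Hx); lra.
  - intros t x h Ht Hx Hh Hxh.
    specialize (Bp1 t x h Ht Hx Hh Hxh); specialize (Bq1 t x h Ht Hx Hh Hxh); lra.
  - intros t s x Ht Hts Hs Hx.
    specialize (Bp2 t s x Ht Hts Hs Hx); specialize (Bq2 t s x Ht Hts Hs Hx); lra.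
  - intros x Hx. apply BN0; [lra | exact Hx].
  - intros x h Hx Hh Hxh. apply BV1; [lra | exact Hx | exact Hh | exact Hxh].
Qed.

Definition initial_energy_bound (L B BN BV CV : R) : R :=
  L * (2 * B ^ 2 + BN * (2 * B ^ 2) + / 2 * BN ^ 2 + / 2 * (BV + 2 * CV * L) ^ 2).

Definition potential_constant (L B BN BV CV : R) : R :=
  potential_bound L (initial_energy_bound L B BN BV CV) (L * (2 * B ^ 2)).

Lemma potential_constant_nonneg (L B BN BV CV : R) :
  0 < L -> 0 <= BN -> 0 <= potential_constant L B BN BV CV.
Proof.
  intros HL HBN. unfold potential_constant, potential_bound, initial_energy_bound.
  pose proof (pow2_ge_0 B); pose proof (pow2_ge_0 BN); pose proof (pow2_ge_0 (BV + 2 * CV * L)).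
  set (mb := L * (2 * B ^ 2)).
  assert (Hmb : 0 <= mb) by (apply Rmult_le_pos; lra).
  assert (0 <= BN * (2 * B ^ 2)) by (apply Rmult_le_pos; lra).
  assert (0 <= L * (2 * B ^ 2 + BN * (2 * B ^ 2) + / 2 * BN ^ 2 + / 2 * (BV + 2 * CV * L) ^ 2))
    by (apply Rmult_le_pos; lra).
  assert (0 <= mb ^ 2 / L)
    by (apply Rmult_le_pos; [apply pow2_ge_0 | left; apply Rinv_0_lt_compat; lra]).
  assert (0 <= 8 * mb ^ 2 * (mb + 1)) by (pose proof (pow2_ge_0 mb); apply Rmult_le_pos; lra).
  lra.
Qed.

Lemma quotient_le_of_sum_le (dt g1 g0 a1 a0 r : R) :
  0 < dt -> g1 - g0 + (a1 - a0) <= dt * r -> (g1 - g0) / dt <= - ((a1 - a0) / dt) + r.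
Proof.
  intros Hdt H. apply (Rmult_le_reg_l dt); [exact Hdt|].
  replace (dt * ((g1 - g0) / dt)) with (g1 - g0) by (field; lra).
  replace (dt * (- ((a1 - a0) / dt) + r)) with (- (a1 - a0) + dt * r) by (field; lra).
  lra.
Qed.

Section ExactGrid.

Variables (L T : R) (E : R -> R -> C) (N V : R -> R -> R) (B BN BV : R).
Hypothesis Hper : forall t x, 0 <= t <= T ->
  E t (x + L) = E t x /\ N t (x + L) = N t x /\ V t (x + L) = V t x.
Hypothesis Hbounds : solution_bounds L T E N V B BN BV.
Variables (K M : nat) (dt dx : R).
Hypotheses (HK : (1 <= K)%nat) (Hdx : 0 < dx) (Hdt : 0 < dt)
  (HL : L = INR K * dx) (HT : T = INR M * dt).

Let Et := exactC dt dx E.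

Lemma grid_time_range (j : nat) : (j <= M)%nat -> 0 <= INR j * dt <= T.
Proof.
  intros Hj. rewrite HT. pose proof (pos_INR j); pose proof (le_INR _ _ Hj). nra.
Qed.

Lemma exact_grid_periodic (j : nat) :
  (j <= M)%nat ->
  periodicC K (Et j) /\ periodicR K (exactR dt dx N j) /\ periodicR K (exactR dt dx V j).
Proof.
  intros Hj. pose proof (grid_time_range j Hj) as Ht.
  assert (Hshift : forall k, IZR (k + Z.of_nat K) * dx = IZR k * dx + L)
    by (intro k; rewrite plus_IZR, <- INR_IZR_INZ, HL; ring).
  unfold Et, exactC, exactR.
  split; [| split]; intro k; rewrite Hshift.
  - apply (proj1 (Hper _ _ Ht)).
  - apply (proj1 (proj2 (Hper _ _ Ht))).
  - apply (proj2 (proj2 (Hper _ _ Ht))).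
Qed.

Lemma exact_grid_bounded (j : nat) :
  (j <= M)%nat -> forall k,
  Rabs (reT Et j k) <= B /\ Rabs (imT Et j k) <= B /\
  Rabs (dxpR dx (reT Et j) k) <= B /\ Rabs (dxpR dx (imT Et j) k) <= B.
Proof.
  intros Hj k. set (t := INR j * dt).
  assert (Ht : 0 <= t <= T) by apply (grid_time_range j Hj).
  destruct Hbounds as [Hb [Hbx _]].
  assert (Pre : forall x, ReF E t (x + L) = ReF E t x)
    by (intro x; unfold ReF; now rewrite (proj1 (Hper t x Ht))).
  assert (Pim : forall x, ImF E t (x + L) = ImF E t x)
    by (intro x; unfold ImF; now rewrite (proj1 (Hper t x Ht))).
  change (reT Et j) with (fun i => ReF E t (IZR i * dx)).
  change (imT Et j) with (fun i => ImF E t (IZR i * dx)).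
  split; [| split; [| split]].
  - apply (grid_sample_bounded K dx L _ HK Hdx HL Pre). intros x Hx; apply (Hb t x Ht Hx).
  - apply (grid_sample_bounded K dx L _ HK Hdx HL Pim). intros x Hx; apply (Hb t x Ht Hx).
  - apply (grid_dxpR_bounded K dx L _ HK Hdx HL Pre).
    intros x h Hx Hh Hxh; apply (Hbx t x h Ht Hx Hh Hxh).
  - apply (grid_dxpR_bounded K dx L _ HK Hdx HL Pim).
    intros x h Hx Hh Hxh; apply (Hbx t x h Ht Hx Hh Hxh).
Qed.

Lemma exact_grid_dt_bounded (j : nat) :
  (j < M)%nat -> forall k,
  Rabs (dtpR dt (reT Et) j k) <= B /\ Rabs (dtpR dt (imT Et) j k) <= B.
Proof.
  intros Hj k. set (t := INR j * dt); set (s := INR (S j) * dt).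
  assert (Ht : 0 <= t <= T) by apply (grid_time_range j ltac:(lia)).
  assert (Hs : 0 <= s <= T) by apply (grid_time_range (S j) ltac:(lia)).
  assert (Hst : s - t = dt) by (unfold s, t; rewrite S_INR; ring).
  destruct Hbounds as [_ [_ [Hbt _]]].
  assert (Hquot : forall F : R -> R -> R, (forall x, F t (x + L) = F t x) ->
            (forall x, F s (x + L) = F s x) ->
            (forall x, 0 <= x <= 2 * L -> Rabs ((F s x - F t x) / (s - t)) <= B) ->
            Rabs ((F s (IZR k * dx) - F t (IZR k * dx)) / dt) <= B).
  { intros F Ft Fs HF. rewrite <- Hst.
    apply (grid_sample_bounded K dx L (fun x => (F s x - F t x) / (s - t)) HK Hdx HL); [|exact HF].
    intro x; cbv beta; now rewrite Ft, Fs. }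
  split.
  - apply (Hquot (ReF E)).
    + intro x; unfold ReF; now rewrite (proj1 (Hper t x Ht)).
    + intro x; unfold ReF; now rewrite (proj1 (Hper s x Hs)).
    + intros x Hx. apply (Hbt t s x); lra.
  - apply (Hquot (ImF E)).
    + intro x; unfold ImF; now rewrite (proj1 (Hper t x Ht)).
    + intro x; unfold ImF; now rewrite (proj1 (Hper s x Hs)).
    + intros x Hx. apply (Hbt t s x); lra.
Qed.

Lemma exact_tauE_periodic (m : nat) : (m < M)%nat -> periodicC K (tauE dt dx E N m).
Proof.
  intros Hm k.
  destruct (exact_grid_periodic m ltac:(lia)) as [PE0 [PN0 _]].
  destruct (exact_grid_periodic (S m) ltac:(lia)) as [PE1 [PN1 _]].
  unfold Et in PE0, PE1. unfold tauE, dtpC, dx2C, mutC, mutR.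
  replace (k + Z.of_nat K + 1)%Z with (k + 1 + Z.of_nat K)%Z by ring.
  replace (k + Z.of_nat K - 1)%Z with (k - 1 + Z.of_nat K)%Z by ring.
  now rewrite !PE0, !PE1, !PN0, !PN1.
Qed.

Variables (CV : R) (Es : nat -> Z -> C) (Ns Vs : nat -> Z -> R).
Hypothesis HCV : 0 <= CV.
Hypothesis Hnum_per : forall m, periodicC K (Es m) /\ periodicR K (Ns m) /\ periodicR K (Vs m).
Hypothesis Hscheme : dvdm_scheme M dt dx Es Ns Vs.
Hypothesis HE0 : forall k, Es 0%nat k = E 0 (IZR k * dx).
Hypothesis HN0 : forall k, Ns 0%nat k = N 0 (IZR k * dx).
Hypothesis HV0 : forall k, Rabs (Vs 0%nat k - V 0 (IZR k * dx)) <= CV * dx ^ 2.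

Lemma initial_dxpR_V_bounded (k : Z) : Rabs (dxpR dx (Vs 0%nat) k) <= BV + 2 * CV * L.
Proof.
  destruct Hbounds as [_ [_ [_ [_ HbV]]]].
  assert (HT0 : 0 <= 0 <= T) by (pose proof (grid_time_range M (le_n M)); lra).
  assert (HV : Rabs (dxpR dx (fun i => V 0 (IZR i * dx)) k) <= BV).
  { apply (grid_dxpR_bounded K dx L (V 0) HK Hdx HL).
    - intro x. apply (proj2 (proj2 (Hper 0 x HT0))).
    - exact HbV. }
  assert (HdxL : dx <= L) by (rewrite HL; pose proof (le_INR 1 K HK); simpl in *; nra).
  pose proof (HV0 (k + 1)%Z) as H1; pose proof (HV0 k) as H0.
  set (w1 := V 0 (IZR (k + 1) * dx)) in *; set (w0 := V 0 (IZR k * dx)) in *.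
  set (u1 := Vs 0%nat (k + 1)%Z) in *; set (u0 := Vs 0%nat k) in *.
  unfold dxpR in HV |- *. fold u1 u0. fold w1 w0 in HV.
  replace ((u1 - u0) / dx) with ((w1 - w0) / dx + (u1 - w1 - (u0 - w0)) / dx) by (field; lra).
  eapply Rle_trans; [apply Rabs_triang|].
  assert (Rabs ((u1 - w1 - (u0 - w0)) / dx) <= 2 * CV * L).
  { unfold Rdiv. rewrite Rabs_mult, (Rabs_pos_eq (/ dx)) by (left; apply Rinv_0_lt_compat; lra).
    apply (Rmult_le_reg_r dx); [exact Hdx|]. rewrite Rmult_assoc, Rinv_l, Rmult_1_r by lra.
    eapply Rle_trans; [apply Rabs_triang|]. rewrite Rabs_Ropp.
    assert (CV * dx ^ 2 <= CV * L * dx)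
      by (assert (0 <= CV * dx) by (apply Rmult_le_pos; lra); nra).
    lra. }
  lra.
Qed.

Lemma initial_data_bounds :
  normsq2 K dx (reT Es 0%nat) (imT Es 0%nat) <= L * (2 * B ^ 2) /\
  energy K dx (reT Es 0%nat) (imT Es 0%nat) (Ns 0%nat) (Vs 0%nat)
  <= initial_energy_bound L B BN BV CV.
Proof.
  assert (HE0' : forall k, Es 0%nat k = Et 0%nat k)
    by (intro k; unfold Et, exactC; rewrite HE0; simpl; now rewrite Rmult_0_l).
  assert (Hre : reT Es 0%nat = reT Et 0%nat)
    by (apply functional_extensionality; intro k; unfold reT, reC; now rewrite HE0').
  assert (Him : imT Es 0%nat = imT Et 0%nat)
    by (apply functional_extensionality; intro k; unfold imT, imC; now rewrite HE0').
  pose proof (exact_grid_bounded 0 ltac:(lia)) as Hb0.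
  assert (HN : forall k, Rabs (Ns 0%nat k) <= BN).
  { destruct Hbounds as [_ [_ [_ [HbN _]]]].
    assert (HT0 : 0 <= 0 <= T) by (pose proof (grid_time_range M (le_n M)); lra).
    intro k; rewrite HN0. apply (grid_sample_bounded K dx L (N 0) HK Hdx HL); [|exact HbN].
    intro x. apply (proj1 (proj2 (Hper 0 x HT0))). }
  rewrite Hre, Him. split.
  - rewrite normsq2_split, HL.
    pose proof (normsq_le_bounded K dx B (reT Et 0%nat) ltac:(lra) (fun k => proj1 (Hb0 k))).
    pose proof (normsq_le_bounded K dx B (imT Et 0%nat) ltac:(lra)
                  (fun k => proj1 (proj2 (Hb0 k)))).
    lra.
  - unfold initial_energy_bound. rewrite HL.
    apply energy_le_bounded; try (intro k; apply Hb0); [lra | exact HN |].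
    intro k; rewrite <- HL. apply initial_dxpR_V_bounded.
Qed.

Lemma dvdm_potential_bounded (j : nat) :
  (j <= M)%nat ->
  normsq K dx (Ns j) <= potential_constant L B BN BV CV /\
  normsq K dx (dxpR dx (Vs j)) <= potential_constant L B BN BV CV.
Proof.
  intros Hj. destruct initial_data_bounds as [Hmass Henergy].
  apply (dvdm_real_potential_bound K M dt dx L _ _ (reT Es) (imT Es) Ns Vs); auto.
  - apply dvdm_scheme_real; [lra | lra | exact Hscheme].
  - intro m'; apply periodicC_reC, Hnum_per.
  - intro m'; apply periodicC_imC, Hnum_per.
  - intro m'; apply Hnum_per.
Qed.

Lemma error_grid_periodic (j : nat) :
  (j <= M)%nat ->
  periodicR K (reT (errC Es Et) j) /\ periodicR K (imT (errC Es Et) j) /\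
  periodicR K (reT Et j) /\ periodicR K (imT Et j) /\
  periodicR K (Vs j) /\ periodicR K (errR Vs (exactR dt dx V) j).
Proof.
  intros Hj. destruct (exact_grid_periodic j Hj) as [PE [_ PV]].
  destruct (Hnum_per j) as [PEs [_ PVs]].
  assert (PeE : periodicC K (errC Es Et j)) by (intro k; unfold errC; now rewrite PEs, PE).
  repeat split; try apply periodicC_reC; try apply periodicC_imC; auto.
  intro k; unfold errR; now rewrite PVs, PV.
Qed.

Lemma dvdm_error_step (m : nat) (tb : R) :
  (m < M)%nat ->
  normC K dx (tauE dt dx E N m) <= tb ->
  normC K dx (dxpC dx (tauE dt dx E N m)) <= tb ->
  normR K dx (tauN dt dx N V m) <= tb ->
  dtps dt (fun j => normC K dx (dxpC dx (errC Es Et j)) ^ 2) m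
  <= - dtps dt (Aterm K dt dx E N Es Ns) m
     + error_constant L B (potential_constant L B BN BV CV)
       * (err_energy K dt dx E N V Es Ns Vs (S m) + err_energy K dt dx E N V Es Ns Vs m)
     + 4 * tb ^ 2.
Proof.
  intros Hm HtE HtdE HtN.
  assert (Hsq : forall r, 0 <= r -> r <= tb -> r ^ 2 <= tb ^ 2) by (intros; apply pow_incr; lra).
  assert (Hequations := fun k => dvdm_error_equations M dt dx E N V Es Ns Vs
                                   ltac:(lra) ltac:(lra) Hscheme m k Hm).
  assert (Htau_per := exact_tauE_periodic m Hm).
  unfold dtps, Et. rewrite !normC_dxpC_grad_sq, !Aterm_coupling, !err_energy_error_energy by lra.
  rewrite Rplus_assoc. apply quotient_le_of_sum_le; [lra|].
  rewrite <- !Rmult_minus_distr_r, <- Rmult_plus_distr_r.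
  apply (error_step_estimate K dt dx m _ _ _ _ Ns _ Vs _ _ _ (tauN dt dx N V m) Hdt Hdx
           (fun j Hj => error_grid_periodic j ltac:(lia))
           (periodicC_reC K _ Htau_per) (periodicC_imC K _ Htau_per)
           (fun k => proj1 (Hequations k)) (fun k => proj1 (proj2 (Hequations k)))
           (fun k => proj1 (proj2 (proj2 (dvdm_scheme_real M dt dx Es Ns Vs ltac:(lra) ltac:(lra)
                                            Hscheme m k Hm))))
           (fun k => proj2 (proj2 (Hequations k)))
           L B _ tb HK HL
           (fun j Hj => exact_grid_bounded j ltac:(lia)) (exact_grid_dt_bounded m Hm)
           (fun j Hj => dvdm_potential_bounded j ltac:(lia))).
  - rewrite <- normC_sq by lra. apply Hsq; [apply sqrt_pos | exact HtE].
  - rewrite <- normC_dxpC_sq by lra. apply Hsq; [apply sqrt_pos | exact HtdE].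
  - rewrite <- normR_sq by lra. apply Hsq; [apply sqrt_pos | exact HtN].
Qed.

End ExactGrid.

Theorem lemma3p7 :
  forall (L T : R) (E : R -> R -> C) (N V : R -> R -> R) (CV c0 : R),
    0 < L -> 0 < T -> 0 <= CV -> 0 < c0 ->
    zakharov_solution L T E N V ->
    exists C3 h0 : R, 0 < C3 /\ 0 < h0 /\
      forall (K M : nat) (Es : nat -> Z -> C) (Ns Vs : nat -> Z -> R),
        (1 <= K)%nat -> (1 <= M)%nat ->
        let dx := L / INR K in
        let dt := T / INR M in
        dx < h0 -> dt < h0 ->
        (forall m, periodicC K (Es m) /\ periodicR K (Ns m) /\ periodicR K (Vs m)) ->
        dvdm_scheme M dt dx Es Ns Vs ->
        (forall k, Es 0%nat k = E 0 (IZR k * dx)) ->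
        (forall k, Ns 0%nat k = N 0 (IZR k * dx)) ->
        (forall k, Rabs (Vs 0%nat k - V 0 (IZR k * dx)) <= CV * dx ^ 2) ->
        (forall m, (m < M)%nat ->
           normC K dx (tauE dt dx E N m) <= c0 * (dt ^ 2 + dx ^ 2) /\
           normC K dx (dxpC dx (tauE dt dx E N m)) <= c0 * (dt ^ 2 + dx ^ 2) /\
           normR K dx (tauN dt dx N V m) <= c0 * (dt ^ 2 + dx ^ 2) /\
           normR K dx (dxpR dx (tauV dt dx E N V m)) <= c0 * (dt ^ 2 + dx ^ 2)) ->
        forall m, (m < M)%nat ->
          dtps dt (fun j => (normC K dx (dxpC dx (errC Es (exactC dt dx E) j))) ^ 2) m
          <= - dtps dt (Aterm K dt dx E N Es Ns) m
             + C3 * (err_energy K dt dx E N V Es Ns Vs (S m)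
                     + err_energy K dt dx E N V Es Ns Vs m)
             + 4 * c0 ^ 2 * (dx ^ 2 + dt ^ 2) ^ 2.
Proof.
  intros L T E N V CV c0 HL HT HCV _ Hsol.
  destruct (zakharov_solution_bounds L T E N V HL HT Hsol)
    as [B [BN [BV [HBN Hbounds]]]].
  destruct Hsol as [_ [Hper _]].
  (* The estimate holds for all step sizes, so [h0 = 1] is arbitrary. *)
  exists (error_constant L B (potential_constant L B BN BV CV)), 1.
  split; [apply error_constant_pos, potential_constant_nonneg; assumption | split; [lra |]].
  intros K M Es Ns Vs HK HM dx dt _ _ Hnum_per Hscheme HE0 HN0 HV0 Htau m Hm.
  assert (HKpos : 0 < INR K) by (apply lt_0_INR; lia).
  assert (HMpos : 0 < INR M) by (apply lt_0_INR; lia).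
  destruct (Htau m Hm) as [HtE [HtdE [HtN _]]].
  replace (4 * c0 ^ 2 * (dx ^ 2 + dt ^ 2) ^ 2) with (4 * (c0 * (dt ^ 2 + dx ^ 2)) ^ 2) by ring.
  apply (dvdm_error_step L T E N V B BN BV Hper Hbounds K M dt dx); auto.
  - unfold dx; apply Rdiv_lt_0_compat; lra.
  - unfold dt; apply Rdiv_lt_0_compat; lra.
  - unfold dx; field; lra.
  - unfold dt; field; lra.
Qed.
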